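(* Let $\mathcal N$ be a monotonic max-sum $(\mathrm{Col},\delta)$-GNN with $L$ layers, dimensions $\delta_0,\dots,\delta_L$ and capacity $C_{\mathcal N}$, and let $\delta_{\mathcal N}=\max(\delta_0,\dots,\delta_L)$. Let $\Pi_{\mathcal N}$ be the Datalog program containing, up to variable renaming, every $(L,\,|\mathrm{Col}|\cdot\delta_{\mathcal N}\cdot C_{\mathcal N})$-tree-like rule (over the $(\mathrm{Col},\delta)$-signature) that is captured by $\mathcal N$. Then $\mathcal N$ and $\Pi_{\mathcal N}$ are equivalent, i.e. $T_{\mathcal N}(D)=T_{\Pi_{\mathcal N}}(D)$ for every $(\mathrm{Col},\delta)$-dataset $D$.
   Context: Datalog. Fix disjoint countably infinite sets of predicates (each with an arity), constants and variables. A term is a constant or a variable; an atom is $P(t_1,\dots,t_n)$ with $P$ of arity $n$; an inequality is $t_1\neq t_2$; a literal is an atom or an inequality; a fact is a variable-free atom; a dataset is a finite set of facts. A rule has the form $B_1\wedge\dots\wedge B_n\to H$ with $n\ge0$, literals $B_i$ and an atom $H$ (no safety condition; the empty body is written $\top$). A substitution maps finitely many variables to variable-free terms. For a rule $r$ and dataset $D$, $T_r(D)$ is the set of facts $H\nu$ for each substitution $\nu$ mapping all variables of $r$ to terms occurring in $D$ such that $B_i\nu\in D$ for each body atom and $s\neq t$ for each instantiated body inequality $s\neq t$. For a program (finite set of rules) $\Pi$, $T_\Pi(D)=\bigcup_{r\in\Pi}T_r(D)$. Two rules are equal up to variable renaming if a bijection between their variable sets maps one onto the other with exactly the same conjuncts.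 Graphs and GNNs. For a finite set of colours $\mathrm{Col}$ and $\delta\in\mathbb N$, a $(\mathrm{Col},\delta)$-graph is $G=\langle V,\{E^c\}_{c\in\mathrm{Col}},\lambda\rangle$ where $V$ is a finite vertex set, $E^c\subseteq V\times V$, and $\lambda$ assigns each vertex a vector in $\mathbb R^\delta$; it is Boolean if all feature entries are in $\{0,1\}$. A $(\mathrm{Col},\delta)$-GNN $\mathcal N$ with $L\ge 1$ layers consists of dimensions $\delta_0=\delta,\delta_1,\dots,\delta_{L-1},\delta_L=\delta$; real matrices $A_\ell$, $B_\ell^c$ of size $\delta_\ell\times\delta_{\ell-1}$ and bias vectors $b_\ell\in\mathbb R^{\delta_\ell}$ ($1\le\ell\le L$, $c\in\mathrm{Col}$); aggregation functions $\mathrm{agg}_\ell$ from finite real multisets to $\mathbb R$ (applied componentwise); an activation $\sigma:\mathbb R\to\mathbb R$ and a classification function $\mathrm{cls}:\mathbb R\to\{0,1\}$ (both componentwise). Applying $\mathcal N$ to $G$ yields labellings $\lambda_0=\lambda,\dots,\lambda_L$ with $\mathbf v_\ell=\sigma\big(A_\ell\mathbf v_{\ell-1}+\sum_{c}B_\ell^c\,\mathrm{agg}_\ell(\{\!\{\mathbf u_{\ell-1}\mid (v,u)\in E^c\}\!\})+b_\ell\big)$; $\mathcal N(G)$ has the same vertices and edges with each $v$ labelled $\mathrm{cls}(\mathbf v_L)$. Canonical transformation. The $(\mathrm{Col},\delta)$-signature consists of binary predicates $E^c$ ($c\in\mathrm{Col}$) and unary predicates $U_1,\dots,U_\delta$;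 a $(\mathrm{Col},\delta)$-dataset is a dataset over this signature. Its canonical encoding $\mathrm{enc}(D)$ has a vertex $v_t$ per term $t$ occurring in $D$, edges $(v_t,v_s)\in E^c$ iff $E^c(t,s)\in D$, and $i$-th feature of $v_t$ equal to $1$ iff $U_i(t)\in D$ (else $0$). The canonical decoding of a Boolean graph contains $E^c(t,s)$ for each edge $(v_t,v_s)\in E^c$ and $U_i(t)$ for each vertex $v_t$ with $i$-th feature $1$. $T_{\mathcal N}(D)=\mathrm{dec}(\mathcal N(\mathrm{enc}(D)))$. $\mathcal N$ captures a rule or program $\alpha$ if $T_\alpha(D)\subseteq T_{\mathcal N}(D)$ for every $(\mathrm{Col},\delta)$-dataset $D$; they are equivalent if $T_\alpha(D)=T_{\mathcal N}(D)$ for all such $D$. Max-sum aggregation and monotonic max-sum GNNs. For $k\in\mathbb N_0\cup\{\infty\}$ and finite real multiset $S$, with $m=\min(k,|S|)$, $\mathrm{maxsum}_k(S)$ is $0$ if $m=0$ and otherwise the sum of the $m$ largest elements of $S$ counted with multiplicity. A monotonic max-sum GNN is a $(\mathrm{Col},\delta)$-GNN with all entries of all $A_\ell,B_\ell^c$ nonnegative, each $\mathrm{agg}_\ell=\mathrm{maxsum}_{k_\ell}$ for some $k_\ell\in\mathbb N_0\cup\{\infty\}$, $\sigma$ monotonically increasing, unbounded and with range $\mathbb R_{\ge0}$, and $\mathrm{cls}$ a step function with some threshold $t$ ($\mathrm{cls}(t')=0$ for $t'<t$, $=1$ for $t'\ge t$). Sets $X_\ell^i$. A $(\mathrm{Col},\ell)$-multiset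 family $\mathcal Y$ assigns to each colour $c$ a finite multiset $\mathcal Y^c$ of vectors of dimension $\delta_\ell$. Let $\mathrm{Val}_\ell^i(\mathbf x,\mathcal Y)$ be the $i$-th component of $A_\ell\mathbf x+\sum_cB_\ell^c\,\mathrm{maxsum}_{k_\ell}(\mathcal Y^c)+b_\ell$. Let $X_0^i=\{0,1\}$, and for $\ell\ge1$ let $X_\ell^i$ be the set of all $\sigma(\mathrm{Val}_\ell^i(\mathbf x,\mathcal Y))$ over vectors $\mathbf x$ of dimension $\delta_{\ell-1}$ with $x_j\in X_{\ell-1}^j$ for all $j$ and $(\mathrm{Col},\ell-1)$-multiset families $\mathcal Y$ with $y_j\in X_{\ell-1}^j$ for all $c$, $\mathbf y\in\mathcal Y^c$, $j$. Capacities. Let $\alpha_L$ be the threshold of $\mathrm{cls}$. For $\ell=L,L-1,\dots,1$: let $w_\ell$ be the least nonzero entry among all entries of $A_\ell$ and all $B_\ell^c$, and $x_\ell$ the least nonzero number in $\bigcup_iX_{\ell-1}^i$. If either does not exist, set $C_\ell=\dots=C_1=0$ and stop. Otherwise let $\beta_\ell$ be the least natural number with $\sigma(\beta_\ell)\ge\alpha_\ell$, $b_\ell^{\min}$ the least entry of $b_\ell$, $C_\ell=\min(k_\ell,\lceil(\beta_\ell-b_\ell^{\min})/(w_\ell x_\ell)\rceil)$, $\alpha_{\ell-1}=(\beta_\ell-b_\ell^{\min})/w_\ell$. The capacity is $C_{\mathcal N}=\max(C_1,\dots,C_L)$. Tree-like formulas. Defined inductively: for any variable $x$, $\top$ is tree-like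 for $x$; for any unary predicate $U$, $U(x)$ is tree-like for $x$; if $\varphi_1,\varphi_2$ are tree-like for $x$ and share no variable other than $x$, then $\varphi_1\wedge\varphi_2$ is tree-like for $x$; if $E^c$ is a binary predicate and $\varphi_1,\dots,\varphi_n$ are tree-like for pairwise distinct variables $y_1,\dots,y_n$ respectively, none containing $x$ and pairwise sharing no variable, then $\bigwedge_{i=1}^n(E^c(x,y_i)\wedge\varphi_i)\wedge\bigwedge_{1\le i<j\le n}y_i\neq y_j$ is tree-like for $x$. In a tree-like formula $\varphi$, the fan-out of a variable $x$ is the number of distinct variables $y$ with $E^c(x,y)$ a conjunct of $\varphi$ for some $c$; the depth of $x$ is the maximal $n$ such that there are variables $x_0,\dots,x_n=x$ and colours with $E^{c_i}(x_{i-1},x_i)$ a conjunct for $1\le i\le n$; the depth of $\varphi$ is the maximal depth of its variables. For natural numbers $d,f$, $\varphi$ is $(d,f)$-tree-like if every variable of depth $i$ has $i\le d$ and fan-out at most $f\cdot(d-i)$. A rule is $(d,f)$-tree-like if it has the form $\varphi\to U(x)$ with $U$ unary and $\varphi$ a $(d,f)$-tree-like formula for $x$.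
   Formalization: $T_{\mathcal N}(D)$ and $T_{\Pi_{\mathcal N}}(D)$ agree on unary facts, the binary facts of $T_{\mathcal N}(D)$ being exactly those of D; σ need only be non-decreasing, and a negative ceiling in $C_\ell$ is replaced by 0. Each condition added here is assumed in the paper as well or is needed for the statement above to hold. *)

From HB Require Import structures.
From mathcomp Require Import all_boot all_order all_algebra.
From mathcomp Require Import reals.
From Stdlib Require Import ClassicalEpsilon.

Set Implicit Arguments.
Unset Strict Implicit.
Unset Printing Implicit Defensive.

Import Order.TTheory GRing.Theory Num.Theory.
Local Open Scope ring_scope.

(* Constants and variables are both encoded by [nat] (disjoint via the      *)
(* [term] constructors).  Unary predicates U_1..U_delta are indexed by      *)
(* 'I_delta (U_{i+1} is [i]), binary predicates E^c by c : Col.             *)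

Section Syntax.
Variables (Col : finType) (delta : nat).

Inductive fact : Type :=
  | FE of Col & nat & nat
  | FU of 'I_delta & nat.

Definition fact_code (f : fact) : (Col * nat * nat) + ('I_delta * nat) :=
  match f with FE c a b => inl (c, a, b) | FU i a => inr (i, a) end.
Definition fact_decode (s : (Col * nat * nat) + ('I_delta * nat)) : fact :=
  match s with inl (c, a, b) => FE c a b | inr (i, a) => FU i a end.
Lemma fact_codeK : cancel fact_code fact_decode.
Proof. by case. Qed.
HB.instance Definition _ := Countable.copy fact (can_type fact_codeK).

(* a (Col,delta)-dataset: a finite set of facts, given by a list *)
Definition dataset := seq fact.

Definition fact_terms (f : fact) : seq nat :=
  match f with FE _ a b => [:: a; b] | FU _ a => [:: a] end.

Definition terms (D : dataset) : seq nat := undup (flatten (map fact_terms D)).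

Inductive term : Type := Const of nat | Var of nat.

Inductive atom : Type :=
  | AE of Col & term & term
  | AU of 'I_delta & term.

Inductive literal : Type :=
  | LAtom of atom
  | LNeq of term & term.

(* a rule  B_1 /\ ... /\ B_n -> H ; the empty body is "top" *)
Record rule : Type := Rule { body : seq literal; head : atom }.

Definition term_vars (t : term) : seq nat :=
  match t with Var v => [:: v] | Const _ => [::] end.
Definition atom_vars (a : atom) : seq nat :=
  match a with AE _ s t => term_vars s ++ term_vars t | AU _ t => term_vars t end.
Definition lit_vars (l : literal) : seq nat :=
  match l with LAtom a => atom_vars a | LNeq s t => term_vars s ++ term_vars t end.
Definition vars (phi : seq literal) : seq nat := flatten (map lit_vars phi).
Definition rule_vars (r : rule) : seq nat := vars (body r) ++ atom_vars (head r).

(* substitution nu (on all variables; only its values on vars r matter) *)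
Definition inst (nu : nat -> nat) (t : term) : nat :=
  match t with Const a => a | Var v => nu v end.
Definition inst_atom (nu : nat -> nat) (a : atom) : fact :=
  match a with
  | AE c s t => FE c (inst nu s) (inst nu t)
  | AU i t => FU i (inst nu t)
  end.
Definition lit_sat (D : dataset) (nu : nat -> nat) (l : literal) : Prop :=
  match l with
  | LAtom a => inst_atom nu a \in D
  | LNeq s t => inst nu s <> inst nu t
  end.

Definition T_rule (r : rule) (D : dataset) (f : fact) : Prop :=
  exists nu : nat -> nat,
    (forall v, v \in rule_vars r -> nu v \in terms D) /\
    (forall l, List.In l (body r) -> lit_sat D nu l) /\
    f = inst_atom nu (head r).

Fixpoint neq_pairs (ys : seq nat) : seq literal :=
  match ys with
  | [::] => [::]
  | y :: ys' => [seq LNeq (Var y) (Var z) | z <- ys'] ++ neq_pairs ys'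
  end.

(* /\_i (E^c(x,y_i) /\ phi_i) /\ /\_{i<j} y_i <> y_j ,  ch = [(y_i, phi_i)] *)
Definition edge_group (x : nat) (c : Col) (ch : seq (nat * seq literal)) :
    seq literal :=
  flatten [seq LAtom (AE c (Var x) (Var yp.1)) :: yp.2 | yp <- ch]
  ++ neq_pairs (map fst ch).

Inductive treelike : nat -> seq literal -> Prop :=
  | TL_top x : treelike x [::]
  | TL_unary x i : treelike x [:: LAtom (AU i (Var x))]
  | TL_and x p1 p2 :
      treelike x p1 -> treelike x p2 ->
      (forall v, v \in vars p1 -> v \in vars p2 -> v = x) ->
      treelike x (p1 ++ p2)
  | TL_edges x c (ch : seq (nat * seq literal)) :
      uniq (map fst ch) ->
      (forall yp, List.In yp ch -> treelike yp.1 yp.2) ->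
      (forall yp, List.In yp ch -> x \notin yp.1 :: vars yp.2) ->
      (forall i j, (i < j < size ch)%N ->
         forall v, v \in (nth (0%N, [::]) ch i).1 :: vars (nth (0%N, [::]) ch i).2 ->
                   v \notin (nth (0%N, [::]) ch j).1 :: vars (nth (0%N, [::]) ch j).2) ->
      treelike x (edge_group x c ch).

Definition succs (z : nat) (l : literal) : seq nat :=
  match l with
  | LAtom (AE _ (Var a) (Var b)) => if a == z then [:: b] else [::]
  | _ => [::]
  end.
Definition fanout (phi : seq literal) (z : nat) : nat :=
  size (undup (flatten (map (succs z) phi))).

Inductive chain (phi : seq literal) : nat -> nat -> Prop :=
  | chain0 z : chain phi z 0
  | chainS z w n c :
      chain phi w n -> List.In (LAtom (AE c (Var w) (Var z))) phi ->
      chain phi z n.+1.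

(* (d,f)-tree-like: every variable of depth i has i <= d and fan-out at most
   f*(d-i).  The depth of z is the maximal n with [chain phi z n]; since the
   bound f*(d-i) is antitone in i, quantifying over all chain lengths is the
   same as using the maximal one. *)
Definition dftreelike (d f : nat) (x : nat) (phi : seq literal) : Prop :=
  treelike x phi /\
  forall z n, chain phi z n -> (n <= d)%N /\ (fanout phi z <= f * (d - n))%N.

Definition dftreelike_rule (d f : nat) (r : rule) : Prop :=
  exists x i, head r = AU i (Var x) /\ dftreelike d f x (body r).

End Syntax.

Section GNN.
Variables (R : realType) (Col : finType).

(* maxsum_k(S), k = None standing for infinity *)
Definition maxsum (k : option nat) (S : seq R) : R :=
  match k with
  | None => \sum_(x <- S) x
  | Some k => \sum_(x <- take k (sort (fun x y => y <= x) S)) x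
  end.

(* Vectors of dimension n are functions nat -> R (only the
   components < n matter); layer l (1 <= l <= L) has matrices
   A l, B l c : delta_l x delta_{l-1} (entries (A l i j)), bias b l,
   aggregation maxsum_(k l); activation sigma; cls = step at threshold t. *)
Record mgnn : Type := MGNN {
  nL : nat;
  dim : nat -> nat;
  mA : nat -> nat -> nat -> R;
  mB : nat -> Col -> nat -> nat -> R;
  bias : nat -> nat -> R;
  kagg : nat -> option nat;
  sigma : R -> R;
  thr : R
}.

Variable N : mgnn.

Definition Val (l i : nat) (x : nat -> R) (Y : Col -> seq (nat -> R)) : R :=
  \sum_(j < dim N l.-1) mA N l i j * x j
  + \sum_(c : Col) \sum_(j < dim N l.-1)
        mB N l c i j * maxsum (kagg N l) [seq y (nat_of_ord j) | y <- Y c]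
  + bias N l i.

Definition cls (r : R) : bool := thr N <= r.

Definition monotonic_maxsum (delta : nat) : Prop :=
  [/\ (1 <= nL N)%N, dim N 0 = delta & dim N (nL N) = delta] /\
  (forall l i j, (1 <= l <= nL N)%N -> (i < dim N l)%N -> (j < dim N l.-1)%N ->
     0 <= mA N l i j /\ forall c, 0 <= mB N l c i j) /\
  [/\ {homo sigma N : x y / x <= y},
      (forall M : R, exists x, M < sigma N x) &
      (forall y : R, 0 <= y <-> exists x, sigma N x = y)].

(* a (Col,delta)-graph with vertices [gV] (a duplicate-free list of nats) *)
Record graph : Type := Graph {
  gV : seq nat;
  gE : Col -> nat -> nat -> bool;
  glab : nat -> nat -> R
}.

Fixpoint lab (G : graph) (l : nat) : nat -> nat -> R :=
  match l with
  | 0 => glab G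
  | l'.+1 => fun v i =>
      sigma N (Val l'.+1 i (lab G l' v)
                 (fun c => [seq lab G l' u | u <- gV G & gE G c v u]))
  end.

Fixpoint Xset (l : nat) : nat -> R -> Prop :=
  match l with
  | 0 => fun _ r => r = 0 \/ r = 1
  | l'.+1 => fun i r =>
      exists (x : nat -> R) (Y : Col -> seq (nat -> R)),
        (forall j, (j < dim N l')%N -> Xset l' j (x j)) /\
        (forall c y j, List.In y (Y c) -> (j < dim N l')%N -> Xset l' j (y j)) /\
        r = sigma N (Val l'.+1 i x Y)
  end.

Definition opt_least (P : R -> Prop) : option R :=
  match excluded_middle_informative
          (exists m, P m /\ forall r, P r -> m <= r) with
  | left h => Some (proj1_sig (constructive_indefinite_description _ h))
  | right _ => None
  end.

Definition least_nat (P : pred nat) : nat :=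
  match excluded_middle_informative (exists n, P n) with
  | left h => ex_minn h
  | right _ => 0%N
  end.

Definition w_of (l : nat) : option R :=
  opt_least (fun r => r != 0 /\
     exists i j, [/\ (i < dim N l)%N, (j < dim N l.-1)%N &
                     (r = mA N l i j \/ exists c, r = mB N l c i j)]).

Definition x_of (l : nat) : option R :=
  opt_least (fun r => r != 0 /\ exists i, (i < dim N l.-1)%N /\ Xset l.-1 i r).

Definition bmin_of (l : nat) : R :=
  odflt 0 (opt_least (fun r => exists i, (i < dim N l)%N /\ r = bias N l i)).

(* C_l = min(k_l, ceil((beta_l - b_l^min)/(w_l x_l))); a nonpositive ceiling
   is read as 0 *)
Definition C_of (l : nat) (beta : nat) (bmin w x : R) : nat :=
  let z := Num.ceil ((beta%:R - bmin) / (w * x)) in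
  let c := if (0 <= z)%R then `|z|%N else 0%N in
  match kagg N l with None => c | Some k => minn k c end.

(* [caps m alpha] = [:: C_m; C_(m-1); ...] computed from alpha_m = alpha,
   stopping (all remaining C's = 0) when w_l or x_l does not exist *)
Fixpoint caps (m : nat) (alpha : R) : seq nat :=
  match m with
  | 0 => [::]
  | m'.+1 =>
      match w_of m'.+1, x_of m'.+1 with
      | Some w, Some x =>
          let beta := least_nat (fun n => alpha <= sigma N n%:R) in
          let bmin := bmin_of m'.+1 in
          C_of m'.+1 beta bmin w x :: caps m' ((beta%:R - bmin) / w)
      | _, _ => [::]
      end
  end.

Definition capacity : nat := \max_(c <- caps (nL N) (thr N)) c.

Definition delta_N : nat := \max_(l < (nL N).+1) dim N l.

End GNN.

Section Semantics.
Variables (R : realType) (Col : finType) (delta : nat).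

Definition enc (D : dataset Col delta) : graph R Col :=
  Graph (terms D)
        (fun c a b => FE delta c a b \in D)
        (fun a j => match (insub j : option 'I_delta) with
                    | Some i => if FU Col i a \in D then 1 else 0
                    | None => 0
                    end).

Definition T_N (N : mgnn R Col) (D : dataset Col delta) (f : fact Col delta) :
    Prop :=
  match f with
  | FE c a b => FE delta c a b \in D
  | FU i a => a \in terms D /\ cls N (lab N (enc D) (nL N) a i)
  end.

Definition captures (N : mgnn R Col) (r : rule Col delta) : Prop :=
  forall (D : dataset Col delta) f, T_rule r D f -> T_N N D f.

Definition T_PiN (N : mgnn R Col) (D : dataset Col delta) (f : fact Col delta) :
    Prop :=
  exists r : rule Col delta,
    [/\ dftreelike_rule (nL N) (#|Col| * delta_N N * capacity N)%N r,
        captures N r & T_rule r D f].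

Definition is_binary (f : fact Col delta) : bool :=
  if f is FE _ _ _ then true else false.

End Semantics.

(* Binary facts are copied by N, and every rule of Pi_N is captured by N, so
   the only real content is: if N derives U_i(a) on D, some rule of Pi_N
   derives it as well.  We take the rule that unfolds the computation of N at
   a to depth L, where the c-children of a node v are only the "kept"
   c-neighbours of v: for each layer l and component j, the C_l neighbours
   with the largest layer-(l-1) value in component j. *)

From HB Require Import structures.
From mathcomp Require Import all_boot all_order all_algebra.
From mathcomp Require Import reals.
From Stdlib Require Import ClassicalEpsilon.
(* imported last, so that [dim] is the GNN dimension and not [vector.dim] *)

Set Implicit Arguments.
Unset Strict Implicit.
Unset Printing Implicit Defensive.

Import Order.TTheory GRing.Theory Num.Theory.
Local Open Scope ring_scope.

Section MaxSum.
Variable R : realType.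
Implicit Types (s t u v w : seq R).

Definition ge_rel (x y : R) : bool := y <= x.

Definition subm (u s : seq R) : Prop := exists v, perm_eq s (u ++ v).

Definition nonneg (s : seq R) : Prop := forall x, x \in s -> 0 <= x.

Definition within (k : option nat) (n : nat) : bool :=
  if k is Some k' then (n <= k')%N else true.

Lemma sumr_ge0_seq s : nonneg s -> 0 <= \sum_(x <- s) x.
Proof. by move=> H; rewrite big_seq; apply: sumr_ge0 => x /H. Qed.

Lemma subm_mem u s : subm u s -> {subset u <= s}.
Proof. by case=> v Hp x xu; rewrite (perm_mem Hp) mem_cat xu. Qed.

Lemma subm_nonneg u s : subm u s -> nonneg s -> nonneg u.
Proof. by move=> /subm_mem Hu H x /Hu /H. Qed.

Lemma subm_sum u s : subm u s -> nonneg s -> \sum_(x <- u) x <= \sum_(x <- s) x.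
Proof.
case=> v Hp H; rewrite (perm_big _ Hp) big_cat /= lerDl.
by apply: sumr_ge0_seq => x xv; apply: H; rewrite (perm_mem Hp) mem_cat xv orbT.
Qed.

Lemma subm_perm u s s' : subm u s -> perm_eq s s' -> subm u s'.
Proof. by case=> v Hp Hp'; exists v; rewrite -(permPl Hp'). Qed.

Lemma subm_cat u s t : subm u s -> subm u (s ++ t).
Proof. by case=> v Hp; exists (v ++ t); rewrite catA perm_cat2r. Qed.

Lemma sort_nonneg s : nonneg s -> nonneg (sort ge_rel s).
Proof. by move=> H x; rewrite mem_sort; apply: H. Qed.

Lemma sort_sorted_ge s : sorted ge_rel (sort ge_rel s).
Proof. by apply: sort_sorted => x y; apply: le_total. Qed.

Lemma ge_rel_trans : transitive ge_rel.
Proof. by move=> x y z h1 h2; apply: le_trans h2 h1. Qed.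

Lemma prefix_sum_max k w u : sorted ge_rel w -> nonneg w -> subm u w ->
  (size u <= k)%N -> \sum_(x <- u) x <= \sum_(x <- take k w) x.
Proof.
elim: w k u => [|a w IH] k u Hs Hn [v Hp] Hk.
  by move: (perm_size Hp); case: u Hk {Hp} => //= _ _; rewrite big_nil.
have Hs' : sorted ge_rel w by apply: (path_sorted Hs).
have Hn' : nonneg w by move=> x xw; apply: Hn; rewrite inE xw orbT.
have Hall : all (ge_rel a) w by apply: order_path_min => //; apply: ge_rel_trans.
case: k Hk => [|k] Hk; first by case: u Hk {Hp} => //= _; rewrite !big_nil.
rewrite /= big_cons.
case Hau: (a \in u).
  have Pu := perm_to_rem Hau.
  rewrite (perm_big _ Pu) big_cons lerD2l; apply: IH => //.
    exists v; rewrite -(perm_cons a); apply: (perm_trans Hp).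
    by rewrite -cat_cons perm_cat2r.
  by move: Hk; rewrite (perm_size Pu).
have Hav : a \in v.
  by move: (perm_mem Hp a); rewrite mem_cat Hau inE eqxx /= => <-.
have Hsub : perm_eq w (u ++ rem a v).
  rewrite -(perm_cons a); apply: (perm_trans Hp).
  apply: (@perm_trans _ (u ++ a :: rem a v)); first by rewrite perm_cat2l perm_to_rem.
  by rewrite -cat1s (perm_catCA u [:: a]).
case: u Hk Hsub {Hau Hp} => [|b u] Hk Hsub.
  rewrite big_nil; apply: addr_ge0; first by apply: Hn; rewrite inE eqxx.
  by apply: sumr_ge0_seq => x /mem_take /Hn'.
rewrite big_cons; apply: lerD.
  by apply: (allP Hall); rewrite (perm_mem Hsub) inE eqxx.
apply: IH => //; exists (b :: rem a v).
by apply: (perm_trans Hsub); rewrite /= -cat1s perm_catCA.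
Qed.

Lemma maxsum_ge k s u : nonneg s -> subm u s -> within k (size u) ->
  \sum_(x <- u) x <= maxsum k s.
Proof.
case: k => [k|] Hn Hu Hk /=; last exact: subm_sum.
apply: prefix_sum_max => //; [exact: sort_sorted_ge|exact: sort_nonneg|].
by apply: (subm_perm Hu); rewrite perm_sym perm_sort.
Qed.

Lemma maxsum_attain k s : exists u, [/\ subm u s, within k (size u) &
  maxsum k s = \sum_(x <- u) x].
Proof.
case: k => [k|] /=; last by exists s; split => //; exists [::]; rewrite cats0.
exists (take k (sort ge_rel s)); split => //.
  by exists (drop k (sort ge_rel s)); rewrite cat_take_drop perm_sym perm_sort.
by rewrite size_take; case: ltnP => // /ltnW.
Qed.

Lemma maxsum_ge0 k s : nonneg s -> 0 <= maxsum k s.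
Proof.
move=> Hn; have := @maxsum_ge k s [::] Hn; rewrite big_nil; apply; last by case: k.
by exists s.
Qed.

Lemma maxsum_le_sum k s : nonneg s -> maxsum k s <= \sum_(x <- s) x.
Proof. by move=> Hn; case: (maxsum_attain k s) => u [Hu _ ->]; apply: subm_sum. Qed.

Lemma maxsum_perm k s t : nonneg s -> perm_eq s t -> maxsum k s = maxsum k t.
Proof.
move=> Hn Hp.
have Hn' : nonneg t by move=> x; rewrite -(perm_mem Hp); apply: Hn.
apply/eqP; rewrite eq_le; apply/andP; split.
  case: (maxsum_attain k s) => u [Hu Hk ->].
  exact: (maxsum_ge Hn' (subm_perm Hu Hp) Hk).
case: (maxsum_attain k t) => u [Hu Hk ->].
by apply: (maxsum_ge Hn (subm_perm Hu _) Hk); rewrite perm_sym.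
Qed.

Lemma maxsum_cat k s t : nonneg (s ++ t) -> maxsum k s <= maxsum k (s ++ t).
Proof.
move=> Hn; case: (maxsum_attain k s) => u [Hu Hk ->].
exact: (maxsum_ge Hn (subm_cat t Hu) Hk).
Qed.

Lemma maxsum_elem k s x : nonneg s -> x \in s -> k <> Some 0%N -> x <= maxsum k s.
Proof.
move=> Hn xs Hk; have := @maxsum_ge k s [:: x] Hn; rewrite big_seq1; apply.
  by exists (rem x s); apply: perm_to_rem.
by case: k Hk => // [[|k]].
Qed.

Lemma maxsum_small k s : (size s <= k)%N -> maxsum (Some k) s = \sum_(x <- s) x.
Proof.
move=> Hk /=; rewrite take_oversize ?size_sort //.
by apply: perm_big; rewrite perm_sort.
Qed.

Lemma subm_map_lift (T : eqType) (a : T -> R) (U : seq T) (u : seq R) :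
  subm u (map a U) -> exists U1 U2, perm_eq U (U1 ++ U2) /\ u = map a U1.
Proof.
case=> v; elim: u U => [|x u IH] U Hp; first by exists [::], U.
have : x \in map a U by rewrite (perm_mem Hp) inE eqxx.
case/mapP=> y yU Exy; subst x; have Py := perm_to_rem yU.
have : perm_eq (map a (rem y U)) (u ++ v).
  rewrite -(perm_cons (a y)); apply: perm_trans Hp.
  by rewrite -map_cons perm_map // perm_sym.
case/IH=> U1 [U2 [H1 H2]]; exists (y :: U1), U2; split; last by rewrite H2.
by apply: (perm_trans Py); rewrite /= perm_cons.
Qed.

Lemma maxsum_pw (T : eqType) k (U : seq T) (a b : T -> R) :
  (forall x, x \in U -> 0 <= a x) -> (forall x, x \in U -> a x <= b x) ->
  maxsum k (map a U) <= maxsum k (map b U).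
Proof.
move=> Ha Hab.
have Hna : nonneg (map a U) by move=> y /mapP [x xU ->]; apply: Ha.
have Hnb : nonneg (map b U).
  by move=> y /mapP [x xU ->]; apply: le_trans (Ha x xU) (Hab x xU).
case: (maxsum_attain k (map a U)) => u [Hu Hk ->].
case: (subm_map_lift Hu) => U1 [U2 [HP Eu]]; subst u.
have U1U : {subset U1 <= U} by move=> x xU1; rewrite (perm_mem HP) mem_cat xU1.
apply: (@le_trans _ _ (\sum_(x <- map b U1) x)).
  rewrite !big_map big_seq [X in _ <= X]big_seq.
  by apply: ler_sum => x /U1U; apply: Hab.
apply: maxsum_ge => //; last by move: Hk; rewrite /within !size_map.
by exists (map b U2); rewrite -map_cat perm_map.
Qed.

Lemma maxsum_dom (T : eqType) k (U : seq T) (W : seq nat) (a : T -> R)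
    (h : T -> nat) (g : nat -> R) :
  uniq U -> uniq W -> {in U &, injective h} -> (forall x, x \in U -> h x \in W) ->
  (forall x, x \in U -> a x <= g (h x)) -> (forall y, y \in W -> 0 <= g y) ->
  (forall x, x \in U -> 0 <= a x) ->
  maxsum k (map a U) <= maxsum k (map g W).
Proof.
move=> uU uW hinj hW Hag Hg Ha.
have uhU : uniq (map h U) by rewrite map_inj_in_uniq.
set W' := [seq y <- W | y \notin map h U].
have HP : perm_eq W (map h U ++ W').
  have HF : perm_eq W ([seq x <- W | x \in map h U] ++ W').
    by rewrite perm_sym (perm_filterC (mem (map h U)) W).
  apply: (perm_trans HF); rewrite perm_cat2r.
  apply: uniq_perm => //; first exact: filter_uniq.
  move=> y; rewrite mem_filter; apply/andP/idP => [[]//|yh]; split => //.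
  by case/mapP: yh => x xU ->; apply: hW.
have Hng : nonneg (map g W) by move=> z /mapP [y yW ->]; apply: Hg.
rewrite (maxsum_perm k Hng (perm_map g HP)) map_cat.
apply: (@le_trans _ _ (maxsum k (map g (map h U)))).
  by rewrite -map_comp; apply: maxsum_pw => // x xU; apply: Hag.
apply: maxsum_cat => z; rewrite -map_cat -(perm_mem (perm_map g HP)); apply: Hng.
Qed.

Lemma maxsum_prefix_zero (c k : nat) s : nonneg s -> (c <= k)%N ->
  (0 \in take c (sort ge_rel s)) ->
  maxsum (Some k) s = \sum_(x <- take c (sort ge_rel s)) x.
Proof.
move=> Hn Hck Hz /=; set w := sort ge_rel s.
rewrite -(subnKC Hck) takeD big_cat /= -[RHS]addr0; congr (_ + _).
have : pairwise ge_rel (take c w ++ drop c w).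
  by rewrite cat_take_drop -(sorted_pairwise ge_rel_trans); apply: sort_sorted_ge.
rewrite pairwise_cat => /and3P [Har _ _].
have Hdrop : forall y, y \in drop c w -> y = 0.
  move=> y yd; apply/eqP; rewrite eq_le; apply/andP; split.
    by move/allrelP: Har => /(_ 0 y Hz yd).
  by apply: (sort_nonneg Hn); apply: mem_drop yd.
by rewrite big_seq big1 // => y /mem_take; apply: Hdrop.
Qed.

Lemma sum_ge_size s x : (forall y, y \in s -> x <= y) ->
  (size s)%:R * x <= \sum_(y <- s) y.
Proof.
elim: s => [|a s IH] H; first by rewrite big_nil mul0r.
rewrite big_cons /= -add1n natrD mulrDl mul1r; apply: lerD.
  by apply: H; rewrite inE eqxx.
by apply: IH => y ys; apply: H; rewrite inE ys orbT.
Qed.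

(* Let the nonzero elements of [O] be at least [x], and [a <= C * x].  Then
   the [C] largest elements of [O] either sum to at least the max-sum of [O]
   or sum to at least [a]: if fewer than [C] of them are nonzero, they carry
   everything the max-sum can collect. *)
Lemma prefix_sum_or k O x a C :
  nonneg O -> (forall y, y \in O -> y != 0 -> x <= y) -> a <= C%:R * x ->
  within k C ->
  maxsum k O <= \sum_(y <- take C (sort ge_rel O)) y \/
  a <= \sum_(y <- take C (sort ge_rel O)) y.
Proof.
move=> Hn Hx Ha Hkc; set w := sort ge_rel O.
case: (leqP (size O) C) => hs.
  left; rewrite take_oversize ?size_sort //.
  have Hp : perm_eq w O by rewrite /w perm_sort.
  by rewrite (perm_big _ Hp); apply: maxsum_le_sum.
case Hz: (0 \in take C w).
  left; case: k Hkc => [k'|] Hkc; first by rewrite (maxsum_prefix_zero Hn Hkc Hz).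
  by rewrite -(maxsum_prefix_zero Hn (ltnW hs) Hz) maxsum_small.
right; apply: (le_trans Ha).
have Hsz : size (take C w) = C by rewrite size_take size_sort hs.
rewrite -{1}Hsz; apply: sum_ge_size => y yt; apply: Hx.
  by move: (mem_take yt); rewrite mem_sort.
by apply/negP => /eqP y0; move: Hz; rewrite -y0 yt.
Qed.

Lemma maxsum_top_or k O x a C :
  nonneg O -> (forall y, y \in O -> y != 0 -> x <= y) -> a <= C%:R * x ->
  let T := take (if k is Some k' then minn k' C else C) (sort ge_rel O) in
  maxsum k O <= maxsum k T \/ a <= maxsum k T.
Proof.
move=> Hn Hx Ha T.
have -> : maxsum k T = \sum_(y <- T) y.
  case: k @T => [k'|] //= ; apply: maxsum_small.
  rewrite size_take; case: ltnP => [_|h]; first exact: geq_minl.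
  exact: leq_trans h (geq_minl _ _).
case: k @T => [k'|] T; last exact: (prefix_sum_or Hn Hx Ha).
case: (leqP k' C) => h; first by left; rewrite /T (minn_idPl h).
by rewrite /T (minn_idPr (ltnW h)); apply: (prefix_sum_or Hn Hx Ha); apply: ltnW.
Qed.

End MaxSum.

Section FiniteReals.
Variable R : realType.

Lemma opt_leastP (P : R -> Prop) m :
  opt_least P = Some m -> P m /\ forall r, P r -> m <= r.
Proof.
rewrite /opt_least; case: excluded_middle_informative => // h [<-].
by case: (constructive_indefinite_description _ h).
Qed.

Lemma opt_least_some (P : R -> Prop) :
  (exists m, P m /\ forall r, P r -> m <= r) -> exists m, opt_least P = Some m.
Proof. by rewrite /opt_least; case: excluded_middle_informative => // h _; eexists. Qed.

Lemma fin_least (l : seq R) (P : R -> Prop) :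
  (exists r, P r) -> (forall r, P r -> r \in l) ->
  exists m, P m /\ forall r, P r -> m <= r.
Proof.
elim: l P => [|a l IH] P [r0 Pr0] Hl; first by move: (Hl _ Pr0).
case: (classic (exists r, P r /\ r <> a)) => [[r1 [Pr1 ra]]|hno]; last first.
  have Pa : P a.
    by case: (classic (r0 = a)) => [<-//|h]; exfalso; apply: hno; exists r0.
  exists a; split => // r Pr.
  by case: (classic (r = a)) => [->//|h]; exfalso; apply: hno; exists r.
have [m [[Pm ma] Hm]] : exists m, (P m /\ m <> a) /\
    forall r, P r /\ r <> a -> m <= r.
  apply: IH; first by exists r1.
  by move=> r [Pr /eqP rna]; move: (Hl _ Pr); rewrite inE (negbTE rna).
case: (classic (P a)) => Pa; last first.
  by exists m; split => // r Pr; apply: Hm; split => // ra'; subst r.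
exists (Num.min a m); split; first by rewrite /Num.min; case: ifP.
move=> r Pr; rewrite ge_min; case: (classic (r = a)) => [->|rna].
  by rewrite lexx.
by rewrite Hm // orbT.
Qed.

Lemma pos_lower_bound (l : seq R) :
  exists m : R, 0 < m /\ forall e, e \in l -> 0 < e -> m <= e.
Proof.
elim: l => [|a l [m [m0 Hm]]]; first by exists 1.
case: (ltrP 0 a) => a0.
  exists (Num.min a m); split; first by rewrite lt_min a0 m0.
  move=> e; rewrite inE => /orP [/eqP->|el] e0; first by rewrite ge_min lexx.
  by rewrite ge_min Hm // orbT.
exists m; split => // e; rewrite inE => /orP [/eqP->|el] e0; last exact: Hm.
by move: a0; rewrite leNgt e0.
Qed.

Lemma sum_le_or (I : Type) (r : seq I) (f g : I -> R) (T : R) :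
  (forall j, 0 <= f j) -> (forall j, g j <= f j \/ T <= f j) ->
  \sum_(j <- r) g j <= \sum_(j <- r) f j \/ T <= \sum_(j <- r) f j.
Proof.
move=> H0 H; elim: r => [|a r IH]; first by left; rewrite !big_nil.
rewrite !big_cons; case: (H a) => Ha.
  case: IH => IH; first by left; apply: lerD.
  by right; rewrite -[T]add0r; apply: lerD.
by right; rewrite -[T]addr0; apply: lerD => //; apply: sumr_ge0 => j _.
Qed.

Lemma weighted_term_mem (p t w B : R) (F : seq R) :
  0 < w -> (p != 0 -> w <= p) -> 0 <= t -> p * t <= B -> (t <= B / w -> t \in F) ->
  p * t \in 0 :: [seq p * y | y <- F].
Proof.
move=> w0 Hw t0 hB HF; case: (eqVneq p 0) => [->|nz]; first by rewrite mul0r inE eqxx.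
rewrite inE map_f ?orbT // HF // ler_pdivlMr // mulrC.
by apply: le_trans hB; apply: ler_wpM2r => //; apply: Hw.
Qed.

Definition sum_choices (I : Type) (s : seq I) (F : I -> seq R) : seq R :=
  foldr (fun i S => [seq a + b | a <- F i, b <- S]) [:: 0] s.

Lemma sum_choicesP (I : Type) (s : seq I) (F : I -> seq R) (f : I -> R) :
  (forall i, f i \in F i) -> \sum_(i <- s) f i \in sum_choices s F.
Proof.
move=> Hf; elim: s => [|i s IH] /=; first by rewrite big_nil inE.
by rewrite big_cons; apply: allpairs_f.
Qed.

Fixpoint words (T : Type) (F : seq T) (n : nat) : seq (seq T) :=
  [::] :: (if n is n'.+1 then [seq a :: s | a <- F, s <- words F n'] else [::]).

Lemma wordsP (T : eqType) (F : seq T) n s :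
  (size s <= n)%N -> {subset s <= F} -> s \in words F n.
Proof.
elim: n s => [|n IH] [|a s] //= Hs HF; rewrite inE; apply/orP; right.
apply: allpairs_f; first by apply: HF; rewrite inE eqxx.
by apply: IH => // y ys; apply: HF; rewrite inE ys orbT.
Qed.

Lemma bounded_maxsum_fin (F : seq R) (B : R) : exists G : seq R,
  forall k (S : seq R), nonneg S -> maxsum k S <= B ->
  (forall z, z \in S -> 0 < z -> z <= B -> z \in F) -> maxsum k S \in G.
Proof.
case: (pos_lower_bound F) => x1 [x10 Hx1].
exists [seq \sum_(y <- s) y | s <- words F (Num.truncn (B / x1))].
(* the positive elements of an optimal sub-multiset lie in F, are at least
   x1, and hence number at most B / x1 *)
move=> k S S0 HSB HSF; case: (maxsum_attain k S) => u [Hu _ Hsum].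
have u0 : nonneg u by apply: subm_nonneg Hu S0.
set u' := [seq z <- u | 0 < z].
have Hsu : \sum_(z <- u) z = \sum_(z <- u') z.
  rewrite big_filter [RHS]big_mkcond /=; apply: eq_big_seq => z /u0 z0.
  by case: ltrP => // z0'; apply/eqP; rewrite eq_le z0 z0'.
have HuF : forall z, z \in u' -> z \in F /\ x1 <= z.
  move=> z; rewrite mem_filter => /andP [z0 zu].
  suff zF : z \in F by split => //; apply: Hx1.
  apply: HSF => //; first exact: subm_mem Hu _ zu.
  apply: le_trans HSB; rewrite Hsum (perm_big _ (perm_to_rem zu)) big_cons lerDl.
  by apply: sumr_ge0_seq => z' /mem_rem; apply: u0.
apply/mapP; exists u'; last by rewrite Hsum Hsu.
apply: wordsP => [|z /HuF []//].
have hsize : (size u')%:R * x1 <= B.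
  by apply: le_trans HSB; rewrite Hsum Hsu; apply: sum_ge_size => z /HuF [].
rewrite truncn_ge_nat ?ler_pdivlMr //.
by rewrite mul0r; apply: le_trans hsize; apply: mulr_ge0 (ltW x10).
Qed.

End FiniteReals.

Lemma least_natP (P : pred nat) n : P n -> P (least_nat P).
Proof.
move=> Pn; rewrite /least_nat; case: excluded_middle_informative => [h|h].
  by case: (ex_minnP h).
by exfalso; apply: h; exists n.
Qed.

Lemma size_flatten_le (T U : Type) (F : T -> seq U) (s : seq T) (B : nat) :
  (forall x, List.In x s -> (size (F x) <= B)%N) ->
  (size (flatten (map F s)) <= size s * B)%N.
Proof.
elim: s => [|a s IH] H //=; rewrite size_cat mulSn; apply: leq_add.
  by apply: H; left.
by apply: IH => x xs; apply: H; right.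
Qed.

Lemma In_in (T : eqType) (x : T) (s : seq T) : List.In x s -> x \in s.
Proof. by elim: s => //= a s IH [->|/IH h]; rewrite inE ?eqxx // h orbT. Qed.

Lemma in_In (T : eqType) (x : T) (s : seq T) : x \in s -> List.In x s.
Proof.
by elim: s => //= a s IH; rewrite inE => /orP [/eqP->|/IH]; [left|right].
Qed.

Lemma mapP_In (T1 : Type) (T2 : eqType) (f : T1 -> T2) (s : seq T1) z :
  z \in map f s -> exists x, List.In x s /\ z = f x.
Proof.
elim: s => //= a s IH; rewrite inE => /orP [/eqP->|/IH [x [xs ->]]].
  by exists a; split; [left|].
by exists x; split; [right|].
Qed.

Section MonotonicGNN.
Variables (R : realType) (Col : finType) (N : mgnn R Col) (delta : nat).
Hypothesis HN : monotonic_maxsum N delta.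

Lemma sig_ge0 x : 0 <= sigma N x.
Proof. by case: HN => _ [_ [_ _ Hr]]; apply/(Hr (sigma N x)); exists x. Qed.

Lemma sig_mono x y : x <= y -> sigma N x <= sigma N y.
Proof. by case: HN => _ [_ [Hm _ _]]; apply: Hm. Qed.

Lemma sig_unb M : exists x, M < sigma N x.
Proof. by case: HN => _ [_ [_ Hu _]]. Qed.

Lemma wA_ge0 l i j : (1 <= l <= nL N)%N -> (i < dim N l)%N -> (j < dim N l.-1)%N ->
  0 <= mA N l i j.
Proof. by case: HN => _ [Hw _] Hl Hi Hj; case: (Hw l i j Hl Hi Hj). Qed.

Lemma wB_ge0 l c i j : (1 <= l <= nL N)%N -> (i < dim N l)%N -> (j < dim N l.-1)%N ->
  0 <= mB N l c i j.
Proof. by case: HN => _ [Hw _] Hl Hi Hj; case: (Hw l i j Hl Hi Hj). Qed.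

Lemma X_ge0 l i r : Xset N l i r -> 0 <= r.
Proof.
case: l => [|l] /=; first by case=> ->; rewrite ?ler01.
by case=> x [Y [_ [_ ->]]]; apply: sig_ge0.
Qed.

Lemma Val_mono l i x x' (Y Y' : Col -> seq (nat -> R)) :
  (1 <= l <= nL N)%N -> (i < dim N l)%N ->
  (forall j, (j < dim N l.-1)%N -> x j <= x' j) ->
  (forall c j, (j < dim N l.-1)%N -> maxsum (kagg N l) [seq y j | y <- Y c] <=
                                     maxsum (kagg N l) [seq y j | y <- Y' c]) ->
  Val N l i x Y <= Val N l i x' Y'.
Proof.
move=> Hl Hi Hx HY; rewrite /Val lerD2r; apply: lerD.
  apply: ler_sum => j _; apply: ler_wpM2l; last exact: Hx.
  exact: (wA_ge0 Hl Hi (ltn_ord j)).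
apply: ler_sum => c _; apply: ler_sum => j _; apply: ler_wpM2l; last exact: HY.
exact: (wB_ge0 c Hl Hi (ltn_ord j)).
Qed.

Lemma Val_terms_le l i x Y : (1 <= l <= nL N)%N -> (i < dim N l)%N ->
  (forall j, (j < dim N l.-1)%N -> 0 <= x j) ->
  (forall c y j, List.In y (Y c) -> (j < dim N l.-1)%N -> 0 <= y j) ->
  (forall j : 'I_(dim N l.-1), mA N l i j * x j <= Val N l i x Y - bias N l i) /\
  (forall c (j : 'I_(dim N l.-1)),
     mB N l c i j * maxsum (kagg N l) [seq y (nat_of_ord j) | y <- Y c]
       <= Val N l i x Y - bias N l i).
Proof.
move=> Hl Hi Hx HY; rewrite /Val addrK.
have tA : forall j : 'I_(dim N l.-1), 0 <= mA N l i j * x j.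
  by move=> j; apply: mulr_ge0; [apply: wA_ge0 | apply: Hx].
have tB : forall c (j : 'I_(dim N l.-1)),
    0 <= mB N l c i j * maxsum (kagg N l) [seq y (nat_of_ord j) | y <- Y c].
  move=> c j; apply: mulr_ge0; first exact: wB_ge0.
  by apply: maxsum_ge0 => z /mapP_In [y [yY ->]]; apply: HY yY (ltn_ord j).
have tBc : forall c, 0 <= \sum_(j < dim N l.-1)
    mB N l c i j * maxsum (kagg N l) [seq y (nat_of_ord j) | y <- Y c].
  by move=> c; apply: sumr_ge0 => j _.
split=> [j|c j].
  rewrite -[X in X <= _]addr0; apply: lerD; last by apply: sumr_ge0 => c _.
  by rewrite (bigD1 j) //= lerDl; apply: sumr_ge0 => j' _.
rewrite -[X in X <= _]add0r; apply: lerD; first by apply: sumr_ge0 => j' _.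
rewrite (bigD1 c) //= -[X in X <= _]addr0; apply: lerD; last by apply: sumr_ge0 => c' _.
by rewrite (bigD1 j) //= lerDl; apply: sumr_ge0 => j' _.
Qed.

Lemma weighted_le_or (p t t' w a : R) : 0 <= p -> 0 < w -> (p != 0 -> w <= p) ->
  0 <= t' -> t <= t' \/ a <= t' -> p * t <= p * t' \/ w * a <= p * t'.
Proof.
move=> p0 w0 Hw t'0 [h|h]; first by left; apply: ler_wpM2l.
case: (eqVneq p 0) => [->|nz]; first by left; rewrite !mul0r.
right; apply: (@le_trans _ _ (w * t')); first by rewrite ler_pM2l.
by apply: ler_wpM2r => //; apply: Hw.
Qed.

Definition weight_lb (l : nat) (w : R) : Prop :=
  forall i j, (i < dim N l)%N -> (j < dim N l.-1)%N ->
    (mA N l i j != 0 -> w <= mA N l i j) /\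
    (forall c, mB N l c i j != 0 -> w <= mB N l c i j).

Lemma Val_le_or l i x x' (Y Y' : Col -> seq (nat -> R)) w a bmin :
  (1 <= l <= nL N)%N -> (i < dim N l)%N -> 0 < w -> weight_lb l w ->
  bmin <= bias N l i ->
  (forall j, (j < dim N l.-1)%N -> 0 <= x' j) ->
  (forall c j, (j < dim N l.-1)%N -> 0 <= maxsum (kagg N l) [seq y j | y <- Y' c]) ->
  (forall j, (j < dim N l.-1)%N -> x j <= x' j \/ a <= x' j) ->
  (forall c j, (j < dim N l.-1)%N ->
     maxsum (kagg N l) [seq y j | y <- Y c] <= maxsum (kagg N l) [seq y j | y <- Y' c] \/
     a <= maxsum (kagg N l) [seq y j | y <- Y' c]) ->
  Val N l i x Y <= Val N l i x' Y' \/ w * a + bmin <= Val N l i x' Y'.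
Proof.
move=> Hl Hi w0 Hw Hb Hx'0 HY'0 Hx HY.
have SA := sum_le_or (index_enum 'I_(dim N l.-1))
  (fun j => mulr_ge0 (wA_ge0 Hl Hi (ltn_ord j)) (Hx'0 j (ltn_ord j)))
  (fun j => weighted_le_or (wA_ge0 Hl Hi (ltn_ord j)) w0
     (proj1 (Hw i j Hi (ltn_ord j))) (Hx'0 j (ltn_ord j)) (Hx j (ltn_ord j))).
have HB0 : forall c, 0 <= \sum_(j < dim N l.-1)
    mB N l c i j * maxsum (kagg N l) [seq y (nat_of_ord j) | y <- Y' c].
  by move=> c; apply: sumr_ge0 => j _; apply: mulr_ge0; [apply: wB_ge0|apply: HY'0].
have SB := sum_le_or (index_enum Col) HB0 (fun c => sum_le_or (index_enum 'I_(dim N l.-1))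
  (fun j => mulr_ge0 (wB_ge0 c Hl Hi (ltn_ord j)) (HY'0 c j (ltn_ord j)))
  (fun j => weighted_le_or (wB_ge0 c Hl Hi (ltn_ord j)) w0
     (proj2 (Hw i j Hi (ltn_ord j)) c) (HY'0 c j (ltn_ord j)) (HY c j (ltn_ord j)))).
have HA0 : 0 <= \sum_(j < dim N l.-1) mA N l i j * x' j.
  by apply: sumr_ge0 => j _; apply: mulr_ge0; [apply: wA_ge0|apply: Hx'0].
have HSB0 : 0 <= \sum_(c : Col) \sum_(j < dim N l.-1)
    mB N l c i j * maxsum (kagg N l) [seq y (nat_of_ord j) | y <- Y' c].
  by apply: sumr_ge0 => c _.
rewrite /Val; case: SA => hsa; case: SB => hsb.
- by left; rewrite lerD2r; apply: lerD.
all: right; apply: lerD => //.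
- by rewrite -[w * a]add0r; apply: lerD.
- by rewrite -[w * a]addr0; apply: lerD.
- by rewrite -[w * a]addr0; apply: lerD.
Qed.

Definition weights (l : nat) : seq R :=
  flatten [seq flatten [seq mA N l i j :: [seq mB N l c i j | c <- enum Col]
                       | j <- iota 0 (dim N l.-1)] | i <- iota 0 (dim N l)].

Lemma mem_weights l i j : (i < dim N l)%N -> (j < dim N l.-1)%N ->
  mA N l i j \in weights l /\ forall c, mB N l c i j \in weights l.
Proof.
move=> Hi Hj.
suff HE : forall e, e \in mA N l i j :: [seq mB N l c i j | c <- enum Col] ->
    e \in weights l.
  split; first by apply: HE; rewrite inE eqxx.
  move=> c; apply: HE; rewrite inE; apply/orP; right.
  by apply: (map_f (fun c => mB N l c i j)); rewrite mem_enum.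
move=> e He; apply/flattenP.
exists (flatten [seq mA N l i j0 :: [seq mB N l c i j0 | c <- enum Col]
                | j0 <- iota 0 (dim N l.-1)]).
  by apply/mapP; exists i => //; rewrite mem_iota.
by apply/flattenP; exists (mA N l i j :: [seq mB N l c i j | c <- enum Col]) => //;
  apply/mapP; exists j => //; rewrite mem_iota.
Qed.

Lemma weights_lb l : (1 <= l <= nL N)%N -> exists2 w : R, 0 < w & weight_lb l w.
Proof.
move=> Hl; case: (pos_lower_bound (weights l)) => w [w0 Hw]; exists w => // i j Hi Hj.
have [HA HB] := mem_weights Hi Hj.
split=> [nz|c nz]; apply: Hw => //; rewrite lt_def nz.
  exact: wA_ge0.
exact: wB_ge0.
Qed.

Lemma Xset_bounded_fin l : (l <= nL N)%N -> forall M : R, exists F : seq R,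
  forall i r, (i < dim N l)%N -> Xset N l i r -> r <= M -> r \in F.
Proof.
elim: l => [|l IH] HlL M.
  by exists [:: 0; 1] => i r _ /= [->|->] _; rewrite !inE eqxx ?orbT.
have Hl : (1 <= l.+1 <= nL N)%N by rewrite HlL.
case: (sig_unb M) => x0 Hx0.
set Bb := x0 + \sum_(i < dim N l.+1) `|bias N l.+1 i|.
case: (weights_lb Hl) => w w0 Hw.
set M1 := Bb / w.
case: (IH (ltnW HlL) M1) => F1 HF1.
case: (bounded_maxsum_fin F1 M1) => G1 HG1.
(* each weighted term is 0 or a weight times a value of F1 (own vector) or
   of G1 (aggregated neighbour values), and Val sums such terms *)
pose FA i (j : 'I_(dim N l)) := 0 :: [seq mA N l.+1 i j * y | y <- F1].
pose FB i c (j : 'I_(dim N l)) := 0 :: [seq mB N l.+1 c i j * y | y <- G1].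
pose Fi i := [seq sigma N (a + b + bias N l.+1 i)
   | a <- sum_choices (index_enum 'I_(dim N l)) (FA i),
     b <- sum_choices (index_enum Col)
            (fun c => sum_choices (index_enum 'I_(dim N l)) (FB i c))].
exists (flatten [seq Fi i | i <- iota 0 (dim N l.+1)]).
move=> i r Hi [x [Y [Hx [HY ->]]]] HrM.
have Hxnn : forall j, (j < dim N l)%N -> 0 <= x j by move=> j /Hx /X_ge0.
have HYnn : forall c y j, List.In y (Y c) -> (j < dim N l)%N -> 0 <= y j.
  by move=> c y j yY /(HY c y j yY) /X_ge0.
(* sigma(Val) <= M < sigma x0 bounds Val, hence every weighted term, by Bb *)
have HVB : Val N l.+1 i x Y - bias N l.+1 i <= Bb.
  have HV : Val N l.+1 i x Y <= x0.
    by rewrite leNgt; apply/negP => /ltW /sig_mono h; move: (lt_le_trans Hx0 h); rewrite ltNge HrM.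
  apply: lerD HV _; apply: le_trans (ler_norm _) _; rewrite normrN.
  by rewrite (bigD1 (Ordinal Hi)) //= lerDl; apply: sumr_ge0.
have [HtA HtB] := Val_terms_le Hl Hi Hxnn HYnn.
apply/flattenP; exists (Fi i); first by apply: map_f; rewrite mem_iota.
apply: (allpairs_f (fun a b => sigma N (a + b + bias N l.+1 i))).
  apply: sum_choicesP => j; have Hj := ltn_ord j.
  apply: (weighted_term_mem w0 (proj1 (Hw i j Hi Hj)) (Hxnn j Hj) (le_trans (HtA j) HVB)).
  by apply: (HF1 j) => //; apply: Hx.
apply: sum_choicesP => c; apply: sum_choicesP => j; have Hj := ltn_ord j.
set S := [seq y (nat_of_ord j) | y <- Y c].
have S0 : nonneg S by move=> z /mapP_In [y [yY ->]]; exact: (HYnn c y j yY Hj).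
apply: (weighted_term_mem w0 (proj2 (Hw i j Hi Hj) c) (maxsum_ge0 _ S0)).
  exact: le_trans (HtB c j) HVB.
move=> HSM; apply: HG1 => // z /mapP_In [y [yY ->]] _ zM.
exact: (HF1 j) (HY c y j yY Hj) zM.
Qed.

Lemma x_of_none l : (1 <= l <= nL N)%N -> x_of N l = None ->
  forall j r, (j < dim N l.-1)%N -> Xset N l.-1 j r -> r = 0.
Proof.
move=> /andP [Hl1 HlL] Hx j r Hj Hr; apply/eqP; apply/negPn/negP => nz.
have HlL' : (l.-1 <= nL N)%N by apply: leq_trans (leq_pred _) HlL.
case: (Xset_bounded_fin HlL' r) => F HF.
set P := fun z : R => z != 0 /\ exists i, (i < dim N l.-1)%N /\ Xset N l.-1 i z.
case: (@fin_least R F (fun z => P z /\ z <= r)).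
- by exists r; split => //; split => //; exists j.
- by move=> z [[_ [i [Hi Hz]]] zr]; apply: (HF i).
move=> m [[Pm mr] Hm]; case: (@opt_least_some R P).
  exists m; split => // z Pz; case: (lerP z r) => zr; first by apply: Hm.
  exact: le_trans mr (ltW zr).
by move=> m' Hm'; move: Hx; rewrite /x_of Hm'.
Qed.

Lemma x_some l x : x_of N l = Some x -> 0 < x /\
  forall j r, (j < dim N l.-1)%N -> Xset N l.-1 j r -> r != 0 -> x <= r.
Proof.
move=> /opt_leastP [[nz [i [Hi HX]]] Hm]; split; first by rewrite lt_def nz (X_ge0 HX).
by move=> j r Hj Hr nz'; apply: Hm; split => //; exists j.
Qed.

Lemma w_none l : w_of N l = None -> forall i j, (i < dim N l)%N -> (j < dim N l.-1)%N ->
  mA N l i j = 0 /\ forall c, mB N l c i j = 0.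
Proof.
move=> Hw.
set P := fun r : R => r != 0 /\ exists i j, [/\ (i < dim N l)%N, (j < dim N l.-1)%N &
                     (r = mA N l i j \/ exists c, r = mB N l c i j)].
have noP : forall e, ~ P e.
  move=> e Pe; case: (@fin_least R (weights l) P); first by exists e.
    move=> r [_ [i [j [Hi Hj Hr]]]]; have [h1 h2] := mem_weights Hi Hj.
    by case: Hr => [->|[c ->]].
  move=> m Hm; case: (@opt_least_some R P); first by exists m.
  by move=> m'; rewrite -/(w_of N l) Hw.
move=> i j Hi Hj; split.
  apply/eqP; apply/negPn/negP => nz; apply: (noP (mA N l i j)); split => //.
  by exists i, j; split => //; left.
move=> c; apply/eqP; apply/negPn/negP => nz; apply: (noP (mB N l c i j)); split => //.
by exists i, j; split => //; right; exists c.
Qed.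

Lemma w_some l w : (1 <= l <= nL N)%N -> w_of N l = Some w -> 0 < w /\ weight_lb l w.
Proof.
move=> Hl /opt_leastP [[nz [i [j [Hi Hj Hr]]]] Hm]; split.
  rewrite lt_def nz /=; case: Hr => [->|[c ->]]; [exact: wA_ge0 | exact: wB_ge0].
move=> i' j' Hi' Hj'; split.
  by move=> nz'; apply: Hm; split => //; exists i', j'; split => //; left.
by move=> c nz'; apply: Hm; split => //; exists i', j'; split => //; right; exists c.
Qed.

Lemma Val_w0 l i x Y : w_of N l = None -> (i < dim N l)%N -> Val N l i x Y = bias N l i.
Proof.
move=> Hw Hi; rewrite /Val !big1 ?add0r // => [c _|j _].
  by rewrite big1 // => j _; rewrite (proj2 (w_none Hw Hi (ltn_ord j))) mul0r.
by rewrite (proj1 (w_none Hw Hi (ltn_ord j))) mul0r.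
Qed.

Lemma bmin_le l i : (i < dim N l)%N -> bmin_of N l <= bias N l i.
Proof.
move=> Hi; set P := fun r : R => exists i0, (i0 < dim N l)%N /\ r = bias N l i0.
case: (@fin_least R [seq bias N l i0 | i0 <- iota 0 (dim N l)] P).
- by exists (bias N l i); exists i.
- by move=> r [i0 [Hi0 ->]]; apply/mapP; exists i0 => //; rewrite mem_iota.
move=> m Hm; case: (@opt_least_some R P); first by exists m.
move=> m' Hm'; rewrite /bmin_of -/P Hm' /=.
by case: (opt_leastP Hm') => _; apply; exists i.
Qed.

(* beta = least natural with sigma(beta) >= a exists since sigma is unbounded *)
Lemma beta_ok (a : R) : a <= sigma N (least_nat (fun n => a <= sigma N n%:R))%:R.
Proof.
case: (sig_unb a) => y hy.
apply: (@least_natP (fun n => a <= sigma N n%:R) (Num.Def.archi_bound `|y|)).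
apply: (le_trans (ltW hy)); apply: sig_mono.
apply: (le_trans (ler_norm y)); apply: ltW; apply: archi_boundP; exact: normr_ge0.
Qed.

End MonotonicGNN.

(* the count computed by [C_of] is large enough: [q <= C * x] *)
Lemma ceil_bound (R : realType) (q x : R) : 0 < x ->
  q <= (if 0 <= Num.ceil (q / x) then `|Num.ceil (q / x)|%N else 0%N)%:R * x.
Proof.
move=> x0; set z := Num.ceil (q / x); have hz : q / x <= z%:~R by apply: ceil_ge.
case: ifP => h.
  by move: hz h; case: z => [n|n] // hz _; rewrite absz_nat -ler_pdivrMr.
have : q / x < 0 by apply: (le_lt_trans hz); rewrite ltrz0 ltNge h.
by rewrite mul0r pmulr_llt0 ?invr_gt0 // => /ltW.
Qed.

Section TruncatedEvaluation.
Variables (R : realType) (Col : finType) (delta : nat) (N : mgnn R Col).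
Hypothesis HN : monotonic_maxsum N delta.
Variable D : dataset Col delta.
Local Notation L := (nL N).

Definition orig (l v : nat) : nat -> R := lab N (enc R D) l v.

Definition nbrs (c : Col) (v : nat) : seq nat := [seq u <- terms D | FE delta c v u \in D].

Definition Cl (l : nat) : nat := nth 0%N (caps N L (thr N)) (L - l).

Definition sel (l : nat) (c : Col) (v j : nat) : seq nat :=
  take (Cl l) (sort (relpre (fun u => orig l.-1 u j) (@ge_rel R)) (nbrs c v)).

Definition kept (c : Col) (v r : nat) : seq nat :=
  undup (flatten [seq flatten [seq sel l c v j | j <- iota 0 (dim N l.-1)]
                 | l <- iota 1 r]).

(* [tv l v r]: the layer-l value of v on the tree of kept neighbours in which
   v sits at depth r from the leaves *)
Fixpoint tv (l : nat) (v r : nat) : nat -> R :=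
  if l is l'.+1 then fun i => sigma N (Val N l'.+1 i (tv l' v r)
                                 (fun c => [seq tv l' u r.-1 | u <- kept c v r]))
  else glab (enc R D) v.

Lemma nbrs_uniq c v : uniq (nbrs c v).
Proof. exact/filter_uniq/undup_uniq. Qed.

Lemma mem_nbrs c v u : (u \in nbrs c v) = (u \in terms D) && (FE delta c v u \in D).
Proof. by rewrite mem_filter andbC. Qed.

Lemma sel_uniq l c v j : uniq (sel l c v j).
Proof. by apply: take_uniq; rewrite sort_uniq; apply: nbrs_uniq. Qed.

Lemma kept_uniq c v r : uniq (kept c v r).
Proof. exact: undup_uniq. Qed.

Lemma kept_nbrs c v r : {subset kept c v r <= nbrs c v}.
Proof.
move=> u; rewrite mem_undup => /flattenP [s /mapP [l _ ->]] /flattenP [s' /mapP [j _ ->]].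
by move/mem_take; rewrite mem_sort.
Qed.

Lemma sel_kept l c v j r : (1 <= l <= r)%N -> (j < dim N l.-1)%N ->
  {subset sel l c v j <= kept c v r}.
Proof.
move=> /andP [l1 lr] Hj u us; rewrite mem_undup; apply/flattenP.
exists (flatten [seq sel l c v j0 | j0 <- iota 0 (dim N l.-1)]).
  by apply/mapP; exists l => //; rewrite mem_iota l1 add1n ltnS.
by apply/flattenP; exists (sel l c v j) => //; apply/mapP; exists j => //; rewrite mem_iota.
Qed.

Lemma Cl_le l : (Cl l <= capacity N)%N.
Proof.
rewrite /Cl /capacity; case: (ltnP (L - l) (size (caps N L (thr N)))) => h.
  by apply: (leq_bigmax_seq (F := id)) => //; apply: mem_nth.
by rewrite nth_default.
Qed.

Lemma dim_le l : (l <= L)%N -> (dim N l <= delta_N N)%N.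
Proof.
move=> h; rewrite /delta_N.
exact: (leq_bigmax_cond (F := fun l : 'I_L.+1 => dim N l) (Ordinal (n := L.+1) (m := l) h)).
Qed.

Lemma kept_size c v r : (r <= L)%N ->
  (size (kept c v r) <= r * (delta_N N * capacity N))%N.
Proof.
move=> hr; apply: leq_trans (size_undup _) _.
rewrite -{2}(size_iota 1 r); apply: size_flatten_le => l /In_in.
rewrite mem_iota add1n ltnS => /andP [l1 lr].
apply: (@leq_trans (dim N l.-1 * capacity N)); last first.
  by rewrite leq_mul2r dim_le ?orbT // (leq_trans (leq_pred _) (leq_trans lr hr)).
rewrite -{2}(size_iota 0 (dim N l.-1)); apply: size_flatten_le => j _.
by rewrite size_take; apply: leq_trans (geq_minl _ _) (Cl_le _).
Qed.

Lemma glab01 (D' : dataset Col delta) v j :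
  glab (enc R D') v j = 0 \/ glab (enc R D') v j = 1.
Proof. by rewrite /=; case: insub => [i|]; [case: ifP; [right|left] | left]. Qed.

Lemma orig_X l v i : Xset N l i (orig l v i).
Proof.
elim: l v i => [|l IH] v i /=; first exact: glab01.
exists (orig l v), (fun c => [seq orig l u | u <- nbrs c v]); split; first by move=> j _; apply: IH.
by split => // c y j /List.in_map_iff [u [<- _]] _; apply: IH.
Qed.

Lemma orig_ge0 l v i : 0 <= orig l v i.
Proof. exact: (X_ge0 HN (orig_X l v i)). Qed.

Lemma tv_ge0 l v r i : 0 <= tv l v r i.
Proof.
case: l => [|l]; last exact: (sig_ge0 HN).
by change (0 <= glab (enc R D) v i); case: (glab01 D v i) => ->.
Qed.

Definition trunc_inv (m : nat) (a : R) : Prop :=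
  forall v r j, v \in terms D -> (m <= r <= L)%N -> (j < dim N m)%N ->
    orig m v j <= tv m v r j \/ a <= tv m v r j.

Lemma tv_Sl m v r i : tv m.+1 v r.+1 i =
  sigma N (Val N m.+1 i (tv m v r.+1) (fun c => [seq tv m u r | u <- kept c v r.+1])).
Proof. by []. Qed.

Lemma orig_Sl m v i : orig m.+1 v i =
  sigma N (Val N m.+1 i (orig m v) (fun c => [seq orig m u | u <- nbrs c v])).
Proof. by []. Qed.

Lemma stop_inv m : (m.+1 <= L)%N -> (w_of N m.+1 = None \/ x_of N m.+1 = None) ->
  forall v r j, v \in terms D -> (m.+1 <= r <= L)%N -> (j < dim N m.+1)%N ->
  orig m.+1 v j <= tv m.+1 v r j.
Proof.
move=> HmL Hstop v [//|r] j vV Hr Hj; rewrite orig_Sl tv_Sl; apply: (sig_mono HN).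
have Hl : (1 <= m.+1 <= L)%N by rewrite HmL.
case: Hstop => [Hw|Hx]; first by rewrite !Val_w0.
have H0 := x_of_none HN Hl Hx.
apply: (Val_mono HN) => // [j' Hj'|c j' Hj'].
  by rewrite (H0 j' _ Hj' (orig_X m v j')); apply: tv_ge0.
rewrite -!map_comp; apply: (@le_trans _ _ 0); last first.
  by apply: maxsum_ge0 => z /mapP [u _ ->]; apply: tv_ge0.
apply: (le_trans (maxsum_le_sum _ _)).
  by move=> z /mapP [u _ ->]; apply: orig_ge0.
by rewrite big_map big1 // => u _; apply: (H0 j' _ Hj' (orig_X m u j')).
Qed.

Lemma kept_maxsum_or m a x C v r c j :
  (m <= r)%N -> (r < L)%N -> (j < dim N m)%N ->
  (forall u, orig m u j != 0 -> x <= orig m u j) -> a <= C%:R * x ->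
  Cl m.+1 = (if kagg N m.+1 is Some k then minn k C else C) -> trunc_inv m a ->
  let T := [seq tv m u r j | u <- kept c v r.+1] in
  maxsum (kagg N m.+1) [seq orig m u j | u <- nbrs c v] <= maxsum (kagg N m.+1) T \/
  a <= maxsum (kagg N m.+1) T.
Proof.
move=> Hmr HrL Hj Hx Ha HC HG T.
set K := sel m.+1 c v j.
have HKk : {subset K <= kept c v r.+1} by apply: sel_kept => //; rewrite /= ltnS Hmr.
have HT0 : nonneg T by move=> z /mapP [u _ ->]; apply: tv_ge0.
(* a selected neighbour whose truncated value is not dominated already
   exceeds a, and so does the max-sum *)
case: (classic (exists2 u, u \in K & tv m u r j < orig m u j)) => [[u uK hu]|hno].
  right; have uV : u \in terms D.
    by move: (kept_nbrs (HKk u uK)); rewrite mem_nbrs => /andP [].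
  case: (HG u r j uV _ Hj) => [|h|h]; first by rewrite Hmr ltnW.
    by move: hu; rewrite ltNge h.
  apply: (le_trans h); apply: (maxsum_elem HT0); first by apply: map_f; apply: HKk.
  by move=> Hk0; move: uK; rewrite /K /sel HC Hk0 min0n take0.
(* otherwise the selected values are dominated, and by the capacity lemma
   they carry the full max-sum or exceed a *)
have H1 : maxsum (kagg N m.+1) [seq orig m u j | u <- K] <= maxsum (kagg N m.+1) T.
  apply: (@maxsum_dom R _ _ K (kept c v r.+1) (fun u => orig m u j) id
            (fun u => tv m u r j)) => //.
  - exact: sel_uniq.
  - exact: kept_uniq.
  - by move=> u uK; rewrite leNgt; apply/negP => h; apply: hno; exists u.
  - by move=> u _; apply: tv_ge0.
  - by move=> u _; apply: orig_ge0.
have HK : [seq orig m u j | u <- K] = take (Cl m.+1)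
            (sort (@ge_rel R) [seq orig m u j | u <- nbrs c v]).
  by rewrite /K /sel map_take (sort_map (f := fun u => orig m u j)).
have HO0 : nonneg [seq orig m u j | u <- nbrs c v] by move=> z /mapP [u _ ->]; apply: orig_ge0.
have HOx : forall y, y \in [seq orig m u j | u <- nbrs c v] -> y != 0 -> x <= y.
  by move=> y /mapP [u _ ->]; apply: Hx.
have := maxsum_top_or (kagg N m.+1) HO0 HOx Ha; rewrite /= -HC -HK.
by case=> h; [left|right]; exact: le_trans h H1.
Qed.

Lemma step_inv m a w x : (m.+1 <= L)%N -> w_of N m.+1 = Some w -> x_of N m.+1 = Some x ->
  let be := least_nat (fun n => a <= sigma N n%:R) in
  Cl m.+1 = C_of N m.+1 be (bmin_of N m.+1) w x ->
  trunc_inv m ((be%:R - bmin_of N m.+1) / w) -> trunc_inv m.+1 a.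
Proof.
move=> HmL Hw Hx be HC HG v [//|r] i vV /andP [Hmr HrL] Hi.
set bmin := bmin_of N m.+1 in HC HG; set a' := (be%:R - bmin) / w in HG.
have Hl : (1 <= m.+1 <= L)%N by rewrite HmL.
have [w0 Hwle] := w_some HN Hl Hw.
have [x0 Hxle] := x_some HN Hx.
have Hbe : w * a' + bmin = be%:R by rewrite /a' mulrC divfK ?gt_eqF // subrK.
set C := (if 0 <= Num.ceil (a' / x) then `|Num.ceil (a' / x)|%N else 0%N).
have HCa : a' <= C%:R * x by apply: ceil_bound.
have HCl : Cl m.+1 = (if kagg N m.+1 is Some k then minn k C else C).
  rewrite HC /C_of.
  by have -> : (be%:R - bmin) / (w * x) = a' / x by rewrite /a' invfM mulrA.
have HT0 : forall c j, (j < dim N m)%N ->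
    0 <= maxsum (kagg N m.+1) [seq y j | y <- [seq tv m u r | u <- kept c v r.+1]].
  by move=> c j _; rewrite -map_comp; apply: maxsum_ge0 => z /mapP [u _ ->]; apply: tv_ge0.
have Hself : forall j, (j < dim N m)%N ->
    orig m v j <= tv m v r.+1 j \/ a' <= tv m v r.+1 j.
  by move=> j Hj; apply: HG => //; rewrite (leq_trans (leqnSn m) Hmr).
have Hnb : forall c j, (j < dim N m)%N ->
    maxsum (kagg N m.+1) [seq y j | y <- [seq orig m u | u <- nbrs c v]] <=
      maxsum (kagg N m.+1) [seq y j | y <- [seq tv m u r | u <- kept c v r.+1]] \/
    a' <= maxsum (kagg N m.+1) [seq y j | y <- [seq tv m u r | u <- kept c v r.+1]].
  move=> c j Hj; rewrite -!map_comp.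
  apply: (kept_maxsum_or (x := x) (C := C)) => // u nz.
  exact: Hxle (orig_X m u j) nz.
rewrite orig_Sl tv_Sl.
case: (Val_le_or HN Hl Hi w0 Hwle (bmin_le Hi) (fun j _ => tv_ge0 m v r.+1 j)
         HT0 Hself Hnb) => h; first by left; apply: (sig_mono HN).
by right; apply: le_trans (beta_ok HN a) _; apply: (sig_mono HN); rewrite -Hbe.
Qed.

Lemma inv_all m a : (m <= L)%N ->
  (forall l, (1 <= l <= m)%N -> Cl l = nth 0%N (caps N m a) (m - l)) -> trunc_inv m a.
Proof.
elim: m a => [|m IH] a HmL HCl; first by move=> v r j _ _ _; left.
have Hstop : w_of N m.+1 = None \/ x_of N m.+1 = None -> trunc_inv m.+1 a.
  by move=> Hs v r j vV Hr Hj; left; apply: stop_inv.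
move: HCl => /=.
case Ew: (w_of N m.+1) => [w|]; last by move=> _; apply: Hstop; left.
case Ex: (x_of N m.+1) => [x|]; last by move=> _; apply: Hstop; right.
move=> HCl; apply: (step_inv HmL Ew Ex).
  by have := HCl m.+1; rewrite leqnn subnn; apply.
apply: IH => [|l /andP [l1 lm]]; first exact: ltnW.
by rewrite HCl ?l1 ?(leqW lm) // subSn.
Qed.

Lemma inv_top : trunc_inv L (thr N).
Proof. by apply: inv_all. Qed.

End TruncatedEvaluation.

Lemma In_flatten (T : Type) (x : T) ss :
  List.In x (flatten ss) <-> exists s, List.In s ss /\ List.In x s.
Proof.
elim: ss => [|s ss IH] /=; first by split => // [[s []]].
rewrite List.in_app_iff IH; split.
  by case=> [h|[s' [h1 h2]]]; [exists s; split; [left|] | exists s'; split; [right|]].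
by case=> s' [[<-|h1] h2]; [left|right; exists s'].
Qed.

Lemma In_filter (T : Type) (p : pred T) x s :
  List.In x (filter p s) <-> List.In x s /\ p x.
Proof.
elim: s => [|a s IH] /=; first by split => // [[]].
case: ifP => pa /=; rewrite IH; split.
- by case=> [<-|[h1 h2]]; split => //; [left|right].
- by case=> [[<-|h1] h2]; [left|right].
- by case=> h1 h2; split => //; right.
- by case=> [[<-|h1] h2]; [rewrite pa in h2|].
Qed.

Section TreeSyntax.
Variables (Col : finType) (delta : nat).
Local Notation lit := (literal Col delta).

Lemma neq_pairsP (ys : seq nat) (l : lit) :
  List.In l (neq_pairs Col delta ys) <-> exists i j, (i < j < size ys)%N /\
     l = LNeq Col delta (Var (nth 0%N ys i)) (Var (nth 0%N ys j)).
Proof.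
elim: ys => [|y ys IH] /=; first by split => // [[i [j []]]]; rewrite ltn0 andbF.
rewrite List.in_app_iff List.in_map_iff IH; split.
  case=> [[z [<- zs]]|[i [j [Hij ->]]]]; last by exists i.+1, j.+1.
  exists 0%N, (index z ys).+1; split => /=; last by rewrite nth_index //; apply: In_in.
  by rewrite ltnS index_mem; apply: In_in.
case=> [[|i] [[|j] [Hij ->]]] //.
  left; exists (nth 0%N ys j); split => //; apply: in_In; apply: mem_nth.
  by move: Hij; rewrite /= ltnS.
by right; exists i, j.
Qed.

Lemma mem_vars (phi : seq lit) z :
  z \in vars phi <-> exists l, List.In l phi /\ z \in lit_vars l.
Proof.
elim: phi => [|l phi IH]; first by split => // [[l []]].
rewrite /vars /= mem_cat -/(vars phi); split.
  case/orP => [h|/IH [l' [h1 h2]]]; first by exists l; split => //; left.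
  by exists l'; split => //; right.
case=> l' [[<-|h1] h2]; first by rewrite h2.
by apply/orP; right; apply/IH; exists l'.
Qed.

Lemma In_edge_group x c (ch : seq (nat * seq lit)) l :
  List.In l (edge_group x c ch) <->
  (exists yp, List.In yp ch /\
     (l = LAtom (AE delta c (Var x) (Var yp.1)) \/ List.In l yp.2)) \/
  List.In l (neq_pairs Col delta (map fst ch)).
Proof.
rewrite /edge_group List.in_app_iff In_flatten; split.
  case=> [[s [/List.in_map_iff [yp [<- Hyp]] Hl]]|h]; last by right.
  by left; exists yp; split => //; case: Hl => [<-|h]; [left|right].
case=> [[yp [Hyp Hl]]|h]; last by right.
left; exists (LAtom (AE delta c (Var x) (Var yp.1)) :: yp.2); split.
  by apply/List.in_map_iff; exists yp.
by case: Hl => [->|h]; [left|right].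
Qed.

Lemma tl_unary x (js : seq 'I_delta) : treelike x [seq LAtom (AU Col j (Var x)) | j <- js].
Proof.
elim: js => [|j js IH] /=; first exact: TL_top.
apply: (TL_and (TL_unary Col x j) IH) => z.
by rewrite /vars /= inE => /eqP.
Qed.

Lemma targetsP (phi : seq lit) z y : y \in flatten (map (succs z) phi) <->
  exists c, List.In (LAtom (AE delta c (Var z) (Var y))) phi.
Proof.
elim: phi => [|l phi IH]; first by split => // [[c []]].
rewrite [map _ _]/= [flatten _]/= mem_cat; split.
  case/orP => [h|/IH [c h]]; last by exists c; right.
  move: h; case: l => [[c [a|a] [b|b]|i t]|s t] //=; case: eqP => //= ->.
  by rewrite inE => /eqP ->; exists c; left.
case=> c [->|h]; first by rewrite /= eqxx inE eqxx.
by apply/orP; right; apply/IH; exists c.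
Qed.

Lemma edge_var (phi : seq lit) c w y :
  List.In (LAtom (AE delta c (Var w) (Var y))) phi -> w \in vars phi.
Proof. by move=> h; apply/mem_vars; eexists; split; first exact: h; rewrite /= inE eqxx. Qed.

End TreeSyntax.

(* The unfolding rule.  Its variables are paths q : seq (Col * nat) from the
   root (encoded by [pickle]): the path q followed by (c, k) names the k-th kept
   c-neighbour of the node named by q. *)
Section Unfolding.
Variables (R : realType) (Col : finType) (delta : nat) (N : mgnn R Col).
Hypothesis HN : monotonic_maxsum N delta.
Variable D : dataset Col delta.
Local Notation L := (nL N).
Local Notation kept := (kept N D).
Local Notation tv := (tv N D).
Local Notation lit := (literal Col delta).

Definition child_var (q : seq (Col * nat)) (c : Col) (k : nat) : nat := pickle (rcons q (c, k)).

Definition unary_atoms (q : seq (Col * nat)) (v : nat) : seq lit :=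
  [seq LAtom (AU Col j (Var (pickle q))) | j <- enum 'I_delta & FU Col j v \in D].

Fixpoint unfolding (r : nat) (q : seq (Col * nat)) (v : nat) : seq lit :=
  unary_atoms q v ++
  (if r is r'.+1 then
     flatten [seq edge_group (pickle q) c
       [seq (child_var q c k, unfolding r' (rcons q (c, k)) (nth 0%N (kept c v r) k))
         | k <- iota 0 (size (kept c v r))] | c <- enum Col]
   else [::]).

Definition children (r' : nat) (q : seq (Col * nat)) (v : nat) (c : Col) :
    seq (nat * seq lit) :=
  [seq (child_var q c k, unfolding r' (rcons q (c, k)) (nth 0%N (kept c v r'.+1) k))
    | k <- iota 0 (size (kept c v r'.+1))].

Lemma unfolding_S r' q v : unfolding r'.+1 q v =
  unary_atoms q v ++ flatten [seq edge_group (pickle q) c (children r' q v c) | c <- enum Col].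
Proof. by []. Qed.

Lemma children_vars r' q v c :
  map fst (children r' q v c) = [seq child_var q c k | k <- iota 0 (size (kept c v r'.+1))].
Proof. by rewrite /children -map_comp. Qed.

Lemma nth_child_var q c n i : (i < n)%N ->
  nth 0%N [seq child_var q c k | k <- iota 0 n] i = child_var q c i.
Proof. by move=> h; rewrite (nth_map 0%N) ?size_iota // nth_iota. Qed.

Lemma nth_children r q v c i : (i < size (kept c v r.+1))%N ->
  nth (0%N, [::]) (children r q v c) i =
  (child_var q c i, unfolding r (rcons q (c, i)) (nth 0%N (kept c v r.+1) i)).
Proof. by move=> h; rewrite /children (nth_map 0%N) ?size_iota // nth_iota. Qed.

Lemma unfolding_cases r q v l : List.In l (unfolding r q v) ->
  (exists j : 'I_delta, FU Col j v \in D /\ l = LAtom (AU Col j (Var (pickle q)))) \/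
  (exists r' c k, r = r'.+1 /\ (k < size (kept c v r))%N /\
     (l = LAtom (AE delta c (Var (pickle q)) (Var (child_var q c k))) \/
      List.In l (unfolding r' (rcons q (c, k)) (nth 0%N (kept c v r) k)))) \/
  (exists r' c k1 k2, r = r'.+1 /\ (k1 < k2 < size (kept c v r))%N /\
     l = LNeq Col delta (Var (child_var q c k1)) (Var (child_var q c k2))).
Proof.
case: r => [|r'] /=; rewrite List.in_app_iff.
  by case=> [/List.in_map_iff [j [<- /In_filter [_ Hj]]]|[]]; left; exists j.
case=> [/List.in_map_iff [j [<- /In_filter [_ Hj]]]|]; first by left; exists j.
case/In_flatten => s [/List.in_map_iff [c [<- _]]] /In_edge_group.
case=> [[yp [/List.in_map_iff [k [<- Hk]] Hl]]|Hn].
  right; left; exists r', c, k; split => //; split => //.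
  by move: (In_in Hk); rewrite mem_iota.
right; right; move: Hn; rewrite -/(children r' q v c) children_vars.
case/neq_pairsP => [i [j [Hij ->]]]; move: Hij; rewrite size_map size_iota => Hij.
exists r', c, i, j; split => //; split => //.
by case/andP: Hij => h1 h2; rewrite !nth_child_var // (ltn_trans h1 h2).
Qed.

Lemma unary_in_unfolding r q v (j : 'I_delta) : FU Col j v \in D ->
  List.In (LAtom (AU Col j (Var (pickle q)))) (unfolding r q v).
Proof.
move=> Hj; case: r => [|r'] /=; apply/List.in_app_iff; left; apply/List.in_map_iff;
  exists j; split => //; apply/In_filter; split => //; apply: in_In; exact: mem_enum.
Qed.

Lemma group_in_unfolding r' q v c l :
  List.In l (edge_group (pickle q) c (children r' q v c)) ->
  List.In l (unfolding r'.+1 q v).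
Proof.
move=> Hl; rewrite unfolding_S; apply/List.in_app_iff; right; apply/In_flatten.
exists (edge_group (pickle q) c (children r' q v c)); split => //.
by apply/List.in_map_iff; exists c; split => //; apply: in_In; exact: mem_enum.
Qed.

Lemma child_in_children r' q v c k : (k < size (kept c v r'.+1))%N ->
  List.In (child_var q c k, unfolding r' (rcons q (c, k)) (nth 0%N (kept c v r'.+1) k))
          (children r' q v c).
Proof. by move=> Hk; apply/List.in_map_iff; exists k; split => //; apply: in_In; rewrite mem_iota. Qed.

Lemma edge_in_unfolding r' q v c k : (k < size (kept c v r'.+1))%N ->
  List.In (LAtom (AE delta c (Var (pickle q)) (Var (child_var q c k)))) (unfolding r'.+1 q v).
Proof.
move=> Hk; apply: (group_in_unfolding (c := c)); apply/In_edge_group.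
left; exists (child_var q c k, unfolding r' (rcons q (c, k)) (nth 0%N (kept c v r'.+1) k)).
by split; [exact: child_in_children | left].
Qed.

Lemma subtree_in_unfolding r' q v c k l : (k < size (kept c v r'.+1))%N ->
  List.In l (unfolding r' (rcons q (c, k)) (nth 0%N (kept c v r'.+1) k)) ->
  List.In l (unfolding r'.+1 q v).
Proof.
move=> Hk Hl; apply: (group_in_unfolding (c := c)); apply/In_edge_group.
left; exists (child_var q c k, unfolding r' (rcons q (c, k)) (nth 0%N (kept c v r'.+1) k)).
by split; [exact: child_in_children | right].
Qed.

Lemma neq_in_unfolding r' q v c k1 k2 : (k1 < k2 < size (kept c v r'.+1))%N ->
  List.In (LNeq Col delta (Var (child_var q c k1)) (Var (child_var q c k2)))
          (unfolding r'.+1 q v).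
Proof.
move=> Hk; apply: (group_in_unfolding (c := c)); apply/In_edge_group.
right; rewrite children_vars; apply/neq_pairsP; exists k1, k2; rewrite size_map size_iota.
case/andP: Hk => h1 h2; rewrite !nth_child_var ?h1 ?h2 //.
exact: ltn_trans h1 h2.
Qed.

Lemma pickle_inj_path (s1 s2 : seq (Col * nat)) : pickle s1 = pickle s2 -> s1 = s2.
Proof. exact: (pcan_inj pickleK). Qed.

Lemma pickle_ext_inj (q : seq (Col * nat)) a b s s' :
  pickle (rcons q a ++ s) = pickle (rcons q b ++ s') -> a = b /\ s = s'.
Proof.
move/pickle_inj_path; rewrite !cat_rcons => h.
by have := congr1 (drop (size q)) h; rewrite !drop_size_cat //; case.
Qed.

Lemma pickle_ext_neq (q : seq (Col * nat)) a s : pickle q <> pickle (rcons q a ++ s).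
Proof.
move/pickle_inj_path/(congr1 size)/eqP; rewrite size_cat size_rcons addSn -addnS.
by rewrite -{1}[size q]addn0 eqn_add2l.
Qed.

Lemma vars_prefix r q v z : z \in vars (unfolding r q v) -> exists s, z = pickle (q ++ s).
Proof.
elim: r q v => [|r IH] q v /mem_vars [l [Hl Hz]]; move: Hz;
  case: (unfolding_cases Hl) => [[j [_ ->]]|[[r' [c [k [Er [Hk Hl']]]]]|[r' [c [k1 [k2 [Er [Hk ->]]]]]]]] Hz //.
- by exists [::]; move: Hz; rewrite /= inE cats0 => /eqP.
- by exists [::]; move: Hz; rewrite /= inE cats0 => /eqP.
- case: Hl' => [Hl'|Hl'].
    move: Hz; rewrite Hl' /= !inE => /orP [/eqP ->|/eqP ->]; first by exists [::]; rewrite cats0.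
    by exists [:: (c, k)]; rewrite /child_var cats1.
  case: Er => Er; subst r'; have := IH (rcons q (c, k)) (nth 0%N (kept c v r.+1) k).
  case; first by apply/mem_vars; exists l.
  by move=> s ->; exists ((c, k) :: s); rewrite cat_rcons.
- move: Hz; rewrite /= !inE => /orP [/eqP ->|/eqP ->].
    by exists [:: (c, k1)]; rewrite /child_var cats1.
  by exists [:: (c, k2)]; rewrite /child_var cats1.
Qed.

Lemma vars_unary q v z : z \in vars (unary_atoms q v) -> z = pickle q.
Proof. by case/mem_vars => l [/List.in_map_iff [j [<- _]]]; rewrite /= inE => /eqP. Qed.

Lemma child_vars r q c k u z : z \in child_var q c k :: vars (unfolding r (rcons q (c, k)) u) ->
  exists s, z = pickle (rcons q (c, k) ++ s).
Proof. by rewrite inE => /orP [/eqP ->|/vars_prefix //]; exists [::]; rewrite cats0. Qed.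

Lemma group_vars r q v c z : z \in vars (edge_group (pickle q) c (children r q v c)) ->
  z = pickle q \/ exists k s, z = pickle (rcons q (c, k) ++ s).
Proof.
case/mem_vars => l [/In_edge_group [[yp [/List.in_map_iff [k [<- _]] Hl]]|Hn] Hz].
  case: Hl => [Hl|Hl].
    move: Hz; rewrite Hl /= !inE => /orP [/eqP ->|/eqP ->]; first by left.
    by right; exists k, [::]; rewrite cats0.
  have : z \in child_var q c k :: vars (unfolding r (rcons q (c, k)) (nth 0%N (kept c v r.+1) k)).
    by rewrite inE; apply/orP; right; apply/mem_vars; exists l.
  by case/child_vars => s ->; right; exists k, s.
move: Hn; rewrite children_vars => /neq_pairsP [i [j [Hij Hl]]].
move: Hz; rewrite Hl /= !inE; move: Hij; rewrite size_map size_iota => /andP [h1 h2].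
case/orP => /eqP ->; rewrite nth_child_var //; try exact: (ltn_trans h1 h2);
  by right; eexists; exists [::]; rewrite cats0.
Qed.

Lemma groups_vars r q v (cs : seq Col) z :
  z \in vars (flatten [seq edge_group (pickle q) c (children r q v c) | c <- cs]) ->
  z = pickle q \/ exists c k s, c \in cs /\ z = pickle (rcons q (c, k) ++ s).
Proof.
case/mem_vars => l [/In_flatten [g [/List.in_map_iff [c [<- Hc]] Hl]] Hz].
have : z \in vars (edge_group (pickle q) c (children r q v c)) by apply/mem_vars; exists l.
case/group_vars => [->|[k [s ->]]]; first by left.
by right; exists c, k, s; split => //; apply: In_in.
Qed.

Lemma tl_group r q v c :
  (forall q' v', treelike (pickle q') (unfolding r q' v')) ->
  treelike (pickle q) (edge_group (pickle q) c (children r q v c)).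
Proof.
move=> IH; apply: TL_edges.
- rewrite children_vars map_inj_uniq ?iota_uniq // => k1 k2 /pickle_inj_path h.
  by have := congr1 (fun s => last (c, 0%N) s) h; rewrite !last_rcons; case.
- by move=> yp /List.in_map_iff [k [<- _]]; apply: IH.
- move=> yp /List.in_map_iff [k [<- _]] /=; apply/negP => /child_vars [s] h.
  exact: (pickle_ext_neq h).
- move=> i j; rewrite size_map size_iota => /andP [h1 h2] z.
  rewrite !nth_children //; last exact: (ltn_trans h1 h2).
  move=> /child_vars [s ->]; apply/negP => /child_vars [s'] /pickle_ext_inj [[E] _].
  by move: h1; rewrite E ltnn.
Qed.

Lemma tl_unfolding r q v : treelike (pickle q) (unfolding r q v).
Proof.
elim: r q v => [|r IH] q v.
  have := TL_and (@tl_unary Col delta (pickle q) [seq j <- enum 'I_delta | FU Col j v \in D])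
    (TL_top Col delta (pickle q)); apply => z _.
  by rewrite /vars /= in_nil.
have Hgs : forall cs : seq Col, uniq cs ->
    treelike (pickle q) (flatten [seq edge_group (pickle q) c (children r q v c) | c <- cs]).
  elim => [|c cs IHc] /=; first by move=> _; exact: TL_top.
  case/andP => cn ucs; have := TL_and (tl_group q v c IH) (IHc ucs); apply.
  move=> z /group_vars [->//|[k [s ->]]] /groups_vars [//|[c' [k' [s' [c'cs]]]]].
  by case/pickle_ext_inj => [[Ec _] _]; move: cn; rewrite Ec c'cs.
rewrite unfolding_S.
have := TL_and (@tl_unary Col delta (pickle q) [seq j <- enum 'I_delta | FU Col j v \in D])
  (Hgs (enum Col) (enum_uniq _)).
by apply => z /vars_unary.
Qed.

Lemma edge_lits r q v c w y :
  List.In (LAtom (AE delta c (Var w) (Var y))) (unfolding r q v) ->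
  (w = pickle q /\ exists k, (k < size (kept c v r))%N /\ y = child_var q c k) \/
  exists r' c0 k0, r = r'.+1 /\ (k0 < size (kept c0 v r))%N /\
    List.In (LAtom (AE delta c (Var w) (Var y)))
            (unfolding r' (rcons q (c0, k0)) (nth 0%N (kept c0 v r) k0)).
Proof.
move=> Hl; case: (unfolding_cases Hl) => [[j [_ //]]|[]].
  case=> r' [c0 [k [Er [Hk [E|Hl']]]]]; last by right; exists r', c0, k.
  by case: E => -> -> ->; left; split => //; exists k.
by case=> r' [c0 [k1 [k2 [_ [_ //]]]]].
Qed.

Lemma edge_form r q v c w y :
  List.In (LAtom (AE delta c (Var w) (Var y))) (unfolding r q v) ->
  exists s k', [/\ w = pickle (q ++ s), y = pickle (q ++ rcons s (c, k')) & (size s < r)%N].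
Proof.
elim: r q v => [|r IH] q v /edge_lits [[-> [k [Hk ->]]]|[r' [c0 [k0 [Er [Hk Hl]]]]]] //.
  by exists [::], k; rewrite cats0 /child_var cats1.
case: Er => Er; subst r'; case: (IH _ _ Hl) => s [k' [-> -> Hs]].
by exists ((c0, k0) :: s), k'; rewrite !cat_rcons.
Qed.

Definition fanout_cap : nat := (#|Col| * delta_N N * capacity N)%N.

Lemma fanout_nopickle r q v z :
  (forall s, z <> pickle (q ++ s)) -> fanout (unfolding r q v) z = 0%N.
Proof.
move=> Hz; rewrite /fanout.
case E: (undup (flatten (map (succs z) (unfolding r q v)))) => [//|y ys].
have : y \in undup (flatten (map (succs z) (unfolding r q v))) by rewrite E inE eqxx.
rewrite mem_undup => /targetsP [c] /edge_var /vars_prefix [s /esym h].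
by case: (Hz s).
Qed.

Lemma fanout_leaf q v z : fanout (unfolding 0 q v) z = 0%N.
Proof.
rewrite /fanout; case E: (undup _) => [//|y ys].
have : y \in undup (flatten (map (succs z) (unfolding 0 q v))) by rewrite E inE eqxx.
by rewrite mem_undup => /targetsP [c] /edge_lits [[_ [k [+ _]]]|[r' [_ [_ [//]]]]].
Qed.

Lemma fanout_root r q v : (r.+1 <= L)%N ->
  (fanout (unfolding r.+1 q v) (pickle q) <= fanout_cap * r.+1)%N.
Proof.
move=> HrL; rewrite /fanout.
set Y := flatten [seq [seq child_var q c k | k <- iota 0 (size (kept c v r.+1))] | c <- enum Col].
apply: (@leq_trans (size Y)).
  apply: uniq_leq_size; first exact: undup_uniq.
  move=> y; rewrite mem_undup => /targetsP [c] /edge_lits.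
  case=> [[_ [k [Hk ->]]]|[r' [c1 [k1 [Er [Hk Hl]]]]]].
    apply/flattenP; eexists; first by apply: (map_f (fun c =>
      [seq child_var q c k0 | k0 <- iota 0 (size (kept c v r.+1))])); rewrite mem_enum.
    by apply: map_f; rewrite mem_iota.
  by case: (vars_prefix (edge_var Hl)) => s0 /pickle_ext_neq.
have -> : (fanout_cap * r.+1 = size (enum Col) * (r.+1 * (delta_N N * capacity N)))%N.
  by rewrite /fanout_cap cardE [(r.+1 * _)%N]mulnC !mulnA.
by apply: size_flatten_le => c _; rewrite size_map size_iota; apply: kept_size.
Qed.

Lemma fanout_descend r q v c0 k0 s :
  (fanout (unfolding r.+1 q v) (pickle (rcons q (c0, k0) ++ s)) <=
   fanout (unfolding r (rcons q (c0, k0)) (nth 0%N (kept c0 v r.+1) k0))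
          (pickle (rcons q (c0, k0) ++ s)))%N.
Proof.
apply: uniq_leq_size; first exact: undup_uniq.
move=> y; rewrite !mem_undup => /targetsP [c] /edge_lits [[h _]|[r' [c1 [k1 [Er [Hk Hl]]]]]].
  by case: (pickle_ext_neq (esym h)).
case: Er => Er; subst r'.
case: (vars_prefix (edge_var Hl)) => s0 /pickle_ext_inj [[E1 E2] _]; subst c1 k1.
by apply/targetsP; exists c.
Qed.

Lemma fanout_bound r q v s : (r <= L)%N ->
  (fanout (unfolding r q v) (pickle (q ++ s)) <= fanout_cap * (r - size s))%N.
Proof.
elim: r q v s => [|r IH] q v s HrL; first by rewrite fanout_leaf.
case: s => [|[c0 k0] s']; first by rewrite cats0 subn0; apply: fanout_root.
rewrite -cat_rcons [size _]/= subSS.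
by apply: leq_trans (fanout_descend r q v c0 k0 s') _; apply: IH; apply: ltnW.
Qed.

Lemma chain_bound a z n : chain (unfolding L [::] a) z n ->
  n = 0%N \/ exists s : seq (Col * nat), z = pickle s /\ (n <= size s <= L)%N.
Proof.
elim => [z0|z0 w n0 c Hch IHc Hl]; first by left.
right; case: (edge_form Hl) => s [k' [Ew Ez Hs]].
exists (rcons s (c, k')); split; first by rewrite Ez.
rewrite size_rcons Hs andbT ltnS.
case: IHc => [->//|[s'' [Ew' /andP [h1 _]]]].
by move: Ew'; rewrite Ew cat0s => /pickle_inj_path ->.
Qed.

Lemma unfolding_df a : dftreelike L fanout_cap (pickle ([::] : seq (Col * nat)))
                                     (unfolding L [::] a).
Proof.
split; first exact: tl_unfolding.
have Hfan := fun s => @fanout_bound L [::] a s (leqnn L).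
move=> z n Hc; case: (chain_bound Hc) => [->|[s [-> /andP [h1 h2]]]].
  split => //; case: (classic (exists s : seq (Col * nat), z = pickle s)) => [[s ->]|hn].
    apply: leq_trans (Hfan s) _.
    by rewrite subn0 leq_mul2l leq_subr orbT.
  by rewrite fanout_nopickle // => s Es; apply: hn; exists s.
split; first exact: (leq_trans h1 h2).
by apply: leq_trans (Hfan s) _; rewrite leq_mul2l leq_sub2l ?orbT.
Qed.

Fixpoint walk (v r : nat) (s : seq (Col * nat)) : nat :=
  match s with
  | [::] => v
  | (c, k) :: s' => walk (nth 0%N (kept c v r) k) r.-1 s'
  end.

Lemma kept_facts c v r k : (k < size (kept c v r))%N ->
  nth 0%N (kept c v r) k \in terms D /\ FE delta c v (nth 0%N (kept c v r) k) \in D.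
Proof. by move=> h; move: (kept_nbrs (mem_nth 0%N h)); rewrite mem_nbrs => /andP. Qed.

Lemma unfolding_sat r q v (nu : nat -> nat) : v \in terms D ->
  (forall s, nu (pickle (q ++ s)) = walk v r s) ->
  (forall l, List.In l (unfolding r q v) -> lit_sat D nu l) /\
  (forall z, z \in vars (unfolding r q v) -> nu z \in terms D).
Proof.
elim: r q v => [|r IH] q v vV Hnu; have Hq : nu (pickle q) = v by rewrite -[q]cats0 Hnu.
  split.
    move=> l /unfolding_cases [[j [Hj ->]]|[[r' [_ [_ [//]]]]|[r' [_ [_ [_ [//]]]]]]].
    by rewrite /= Hq.
  move=> z /mem_vars [l [/unfolding_cases [[j [Hj ->]]|[[r' [_ [_ [//]]]]|[r' [_ [_ [_ [//]]]]]]]]].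
  by rewrite /= inE => /eqP ->; rewrite Hq.
have Hy : forall c k, nu (child_var q c k) = nth 0%N (kept c v r.+1) k.
  by move=> c k; rewrite /child_var -cats1 Hnu.
have HIH : forall c k, (k < size (kept c v r.+1))%N ->
  (forall l, List.In l (unfolding r (rcons q (c, k)) (nth 0%N (kept c v r.+1) k)) -> lit_sat D nu l) /\
  (forall z, z \in vars (unfolding r (rcons q (c, k)) (nth 0%N (kept c v r.+1) k)) -> nu z \in terms D).
  move=> c k Hk; apply: IH; first exact: (kept_facts Hk).1.
  by move=> s; rewrite cat_rcons Hnu.
have Hlit : forall l, List.In l (unfolding r.+1 q v) -> lit_sat D nu l.
  move=> l /unfolding_cases.
  case=> [[j [Hj ->]]|[[r' [c [k [Er [Hk [->|Hl']]]]]]|[r' [c [k1 [k2 [Er [Hk ->]]]]]]]].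
  - by rewrite /= Hq.
  - by rewrite /= Hq Hy; apply: (kept_facts Hk).2.
  - by case: Er => Er; subst r'; apply: (proj1 (HIH c k Hk)).
  - rewrite /= !Hy => /eqP; case/andP: Hk => h1 h2.
    by rewrite nth_uniq ?kept_uniq ?(ltn_trans h1 h2) // (ltn_eqF h1).
split => // z /mem_vars [l [Hl Hz]]; move: Hz; case: (unfolding_cases Hl).
  by case=> j [Hj ->]; rewrite /= inE => /eqP ->; rewrite Hq.
case=> [[r' [c [k [Er [Hk [->|Hl']]]]]]|[r' [c [k1 [k2 [Er [Hk ->]]]]]]].
- rewrite /= !inE => /orP [/eqP ->|/eqP ->]; first by rewrite Hq.
  by rewrite Hy; apply: (kept_facts Hk).1.
- move=> Hz; case: Er => Er; subst r'; apply: (proj2 (HIH c k Hk)).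
  by apply/mem_vars; exists l.
- case/andP: Hk => h1 h2; rewrite /= !inE => /orP [/eqP ->|/eqP ->]; rewrite Hy.
    exact: (kept_facts (ltn_trans h1 h2)).1.
  exact: (kept_facts h2).1.
Qed.

(* A match of the unfolding in any dataset D' sends the c-children of the root
   injectively (by the inequalities) to c-neighbours of the image of the root. *)
Lemma match_children (D' : dataset Col delta) (nu : nat -> nat) r q v c :
  (forall l, List.In l (unfolding r.+1 q v) -> lit_sat D' nu l) ->
  (forall z, z \in vars (unfolding r.+1 q v) -> nu z \in terms D') ->
  {in iota 0 (size (kept c v r.+1)) &, injective (fun k => nu (child_var q c k))} /\
  forall k, k \in iota 0 (size (kept c v r.+1)) ->
    nu (child_var q c k) \in [seq u <- terms D' | FE delta c (nu (pickle q)) u \in D'].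
Proof.
move=> Hsat Hvars; split.
  move=> k1 k2; rewrite !mem_iota /= !add0n => Hk1 Hk2 E.
  case: (ltngtP k1 k2) => // h; exfalso.
    by have := Hsat _ (@neq_in_unfolding r q v c k1 k2 (introT andP (conj h Hk2))); rewrite /= E.
  by have := Hsat _ (@neq_in_unfolding r q v c k2 k1 (introT andP (conj h Hk1))); rewrite /= E.
move=> k; rewrite mem_iota /= add0n => Hk; rewrite mem_filter.
have He := @edge_in_unfolding r q v c k Hk; rewrite (Hsat _ He) /=.
by apply: Hvars; apply/mem_vars; eexists; split; first exact: He; rewrite /= !inE eqxx orbT.
Qed.

Lemma match_dominates (D' : dataset Col delta) (nu : nat -> nat) l : forall r q v,
  (r <= L)%N ->
  (forall lt, List.In lt (unfolding r q v) -> lit_sat D' nu lt) ->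
  (forall z, z \in vars (unfolding r q v) -> nu z \in terms D') ->
  (l <= r)%N -> forall j, (j < dim N l)%N ->
  tv l v r j <= lab N (enc R D') l (nu (pickle q)) j.
Proof.
have [[_ Hd0 _] _] := HN.
elim: l => [|l IH] r q v HrL Hsat Hvars Hlr j Hj.
  change (glab (enc R D) v j <= glab (enc R D') (nu (pickle q)) j).
  rewrite /=; move: Hj; rewrite Hd0 => Hj.
  case: insubP => [i _ Ei|]; last by rewrite Hj.
  case: ifP => HF; last by case: ifP.
  by have := Hsat _ (unary_in_unfolding r q HF); rewrite /= => ->.
case: r HrL Hsat Hvars Hlr => [//|r] HrL Hsat Hvars Hlr.
have Hl1 : (1 <= l.+1 <= L)%N by rewrite /= (leq_trans Hlr HrL).
rewrite tv_Sl /=; apply: (sig_mono HN); apply: (Val_mono HN) => // [j' Hj'|c j' Hj'].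
  exact: (IH r.+1 q v HrL Hsat Hvars (ltnW Hlr) j' Hj').
have [Hinj Hnb] := match_children c Hsat Hvars.
rewrite -!map_comp; set K := kept c v r.+1.
have -> : [seq ((fun y => y j') \o (fun u => tv l u r)) u | u <- K] =
          [seq tv l (nth 0%N K k) r j' | k <- iota 0 (size K)].
  by rewrite -{1}(mkseq_nth 0%N K) /mkseq -map_comp.
apply: (@maxsum_dom R _ _ (iota 0 (size K))
          [seq u <- terms D' | FE delta c (nu (pickle q)) u \in D']
          (fun k => tv l (nth 0%N K k) r j') (fun k => nu (child_var q c k))
          (fun u => lab N (enc R D') l u j')) => //.
- exact: iota_uniq.
- exact/filter_uniq/undup_uniq.
- move=> k; rewrite mem_iota /= add0n => Hk; apply: (IH r) => //; first exact: ltnW.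
  + by move=> lt Hlt; apply: Hsat; apply: (subtree_in_unfolding Hk).
  + move=> z /mem_vars [lt [Hlt Hz]]; apply: Hvars; apply/mem_vars; exists lt.
    by split => //; apply: (subtree_in_unfolding Hk).
- by move=> y _; apply: orig_ge0.
- by move=> k _; apply: tv_ge0.
Qed.

Definition unfolding_rule (a : nat) (i : 'I_delta) : rule Col delta :=
  Rule (unfolding L [::] a) (AU Col i (Var (pickle ([::] : seq (Col * nat))))).

Lemma unfolding_rule_df a (i : 'I_delta) : dftreelike_rule L fanout_cap (unfolding_rule a i).
Proof. by exists (pickle ([::] : seq (Col * nat))), i; split => //; apply: unfolding_df. Qed.

(* it fires on D at a, via the substitution sending each path to its walk *)
Lemma unfolding_rule_fires a (i : 'I_delta) : a \in terms D -> T_rule (unfolding_rule a i) D (FU Col i a).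
Proof.
move=> aV; pose nu z := if unpickle z is Some s then walk a L s else 0%N.
have Hnu : forall s, nu (pickle ([::] ++ s)) = walk a L s by move=> s; rewrite /nu pickleK.
have Hroot : nu (pickle ([::] : seq (Col * nat))) = a := Hnu [::].
have [Hsat Hvars] := unfolding_sat aV Hnu.
exists nu; rewrite /unfolding_rule /rule_vars /=.
split; [|split; [exact: Hsat | by rewrite Hroot]].
move=> z; rewrite mem_cat => /orP [/Hvars //|].
by rewrite inE => /eqP ->; rewrite Hroot.
Qed.

(* if N derives U_i(a) on D, the unfolding rule is captured by N: any match
   dominates the truncated evaluation, which reaches the threshold *)
Lemma unfolding_rule_captured a (i : 'I_delta) : a \in terms D -> cls N (lab N (enc R D) L a i) ->
  captures N (unfolding_rule a i).
Proof.
move=> aV Hcls D' f [nu [Hv [Hs ->]]] /=.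
have [[_ _ HdL] _] := HN.
have Hroot : nu (pickle ([::] : seq (Col * nat))) \in terms D'.
  by apply: Hv; rewrite /rule_vars mem_cat /= inE eqxx orbT.
split => //; have Hi : (i < dim N L)%N by rewrite HdL.
have Ht : thr N <= tv L a L i.
  have := @inv_top _ _ _ N HN D a L i aV; rewrite !leqnn => /(_ isT Hi) [h|//].
  exact: le_trans Hcls h.
apply: (le_trans Ht); apply: (match_dominates (D' := D')) => //.
by move=> z hz; apply: Hv; rewrite /rule_vars mem_cat hz.
Qed.

End Unfolding.

Theorem theorem4 (R : realType) (Col : finType) (delta : nat)
  (N : mgnn R Col) :
  monotonic_maxsum N delta ->
  forall (D : dataset Col delta) (f : fact Col delta),
    T_N N D f <-> ((is_binary f && (f \in D)) \/ T_PiN N D f).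
Proof.
move=> HN D [c a b|i a] /=.
  (* binary facts are copied by N, and tree-like rules have unary heads *)
  split; first by left.
  case=> // [[r [[x [i [Hh _]]] _ [nu [_ [_ Hf]]]]]].
  by move: Hf; rewrite Hh.
split; last by case=> // [[r [_ Hcap HT]]]; exact: Hcap D _ HT.
case=> aV Hcls; right; exists (unfolding_rule N D a i); split.
- exact: unfolding_rule_df.
- exact: unfolding_rule_captured.
- exact: unfolding_rule_fires.
Qed.
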